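(* Let $\Gamma$ be a pointclass which contains $\Sigma^0_1$ and $\Pi^0_1$ and is closed under $\vee$, $\&$, and computable substitutions. (i) Let $E,F$ be equivalence relations on spaces $X,Y$. Let $E\times F$ be the equivalence relation on $X\times Y$ with $(x,y)(E\times F)(x',y')$ iff $xEx'$ and $yFy'$. If $E$ and $F$ are both $\Gamma$-graphable, then $E\times F$ is $\Gamma$-graphable; moreover, if $E$ and $F$ are $\Gamma$-graphable with finite diameters $k$ and $\ell$, then $E\times F$ is $\Gamma$-graphable with diameter $\max(k,\ell)$. (ii) For each $i\in\mathbb{N}$ let $E_i$ be an equivalence relation on a space $X_i$, and suppose $X=\prod_iX_i$ is a recursive Polish space. Suppose there are finite-diameter graphs $G_i$ on $X_i$ such that each $G_i$ is a graphing of $E_i$ and the $G_i$ are in $\Gamma$ uniformly in $i$. If the diameters of the $G_i$ are uniformly bounded, then $\prod_iE_i$ is $\forall^\mathbb{N}\Gamma$-graphable with diameter equal to the maximum of the diameters of the $G_i$. In particular, if $E$ is $\Gamma$-graphable with diameter $k$, then the infinite product $\prod_iE$ is $\forall^\mathbb{N}\Gamma$-graphable with diameter $k$.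
   Context: Spaces are recursive Polish spaces. $\prod_iE_i$ is the equivalence relation on $\prod_iX_i$ with $(x_i)(\prod_iE_i)(y_i)$ iff $x_iE_iy_i$ for all $i$. $\forall^\mathbb{N}\Gamma$ is the pointclass obtained by a universal quantifier over $\mathbb{N}$ in front of $\Gamma$ relations. A graphing of $E$ is a simple undirected graph whose connectedness relation equals $E$; $E$ is $\Gamma$-graphable (with diameter $k$) if it has a graphing in $\Gamma$ (in which $k$ is the least integer such that any two connected points are joined by a path of length at most $k$). *)

From Stdlib Require Import Reals List Arith Cantor.
From Coquelicot Require Import Coquelicot.
Import ListNotations.
Open Scope R_scope.

Inductive prf : Type :=
| PZero : prf
| PSucc : prf
| PProj : nat -> prf
| PComp : prf -> list prf -> prf
| PRec  : prf -> prf -> prf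
| PMin  : prf -> prf.

Inductive eval : prf -> list nat -> nat -> Prop :=
| eZero v : eval PZero v 0
| eSucc v : eval PSucc v (S (hd 0%nat v))
| eProj i v : eval (PProj i) v (nth i v 0%nat)
| eComp f gs v ws y : evals gs v ws -> eval f ws y -> eval (PComp f gs) v y
| eRec0 f g v y : eval f v y -> eval (PRec f g) (0%nat :: v) y
| eRecS f g n v r y :
    eval (PRec f g) (n :: v) r -> eval g (n :: r :: v) y ->
    eval (PRec f g) (S n :: v) y
| eMin f v n :
    eval f (n :: v) 0%nat ->
    (forall m, (m < n)%nat -> exists k, eval f (m :: v) (S k)) ->
    eval (PMin f) v n
with evals : list prf -> list nat -> list nat -> Prop :=
| esNil v : evals [] v []
| esCons g gs v y ys : eval g v y -> evals gs v ys -> evals (g :: gs) v (y :: ys).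

Definition recursive_rel (P : list nat -> Prop) : Prop :=
  exists f : prf, forall v, (P v -> eval f v 1%nat) /\ (~ P v -> eval f v 0%nat).

Definition re_set (W : nat -> Prop) : Prop :=
  exists f : prf, forall n, W n <-> exists y, eval f [n] y.

Definition pair (a b : nat) : nat := Cantor.to_nat (a, b).
Definition unpair (n : nat) : nat * nat := Cantor.of_nat n.

Record space : Type := Space {
  carrier : Type;
  dist : carrier -> carrier -> R;
  pts : nat -> carrier            (* the distinguished dense sequence r_i *)
}.

Definition rat_of (m k : nat) : R := INR m / INR (S k).

Definition is_metric (X : space) : Prop :=
  (forall x y, 0 <= dist X x y) /\
  (forall x y, dist X x y = 0 <-> x = y) /\
  (forall x y, dist X x y = dist X y x) /\
  (forall x y z, dist X x z <= dist X x y + dist X y z).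

Definition is_complete (X : space) : Prop :=
  forall u : nat -> carrier X,
    (forall eps, 0 < eps -> exists N, forall m n, (N <= m)%nat -> (N <= n)%nat ->
        dist X (u m) (u n) < eps) ->
    exists l, forall eps, 0 < eps -> exists N, forall n, (N <= n)%nat ->
        dist X (u n) l < eps.

Definition is_dense_seq (X : space) : Prop :=
  forall x eps, 0 < eps -> exists i, dist X x (pts X i) < eps.

Definition is_RPS (X : space) : Prop :=
  is_metric X /\ is_complete X /\ is_dense_seq X /\
  recursive_rel (fun v => dist X (pts X (nth 0 v 0%nat)) (pts X (nth 1 v 0%nat))
                          < rat_of (nth 2 v 0%nat) (nth 3 v 0%nat)) /\
  recursive_rel (fun v => dist X (pts X (nth 0 v 0%nat)) (pts X (nth 1 v 0%nat))
                          <= rat_of (nth 2 v 0%nat) (nth 3 v 0%nat)).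

Definition nbhd (X : space) (s : nat) (x : carrier X) : Prop :=
  let (i, t) := unpair s in
  let (m, k) := unpair t in
  dist X (pts X i) x < rat_of m k.

Definition natS : space :=
  Space nat (fun a b => if Nat.eqb a b then 0 else 1) (fun n => n).

Definition prodS (X Y : space) : space :=
  Space (carrier X * carrier Y)
        (fun p q => Rmax (dist X (fst p) (fst q)) (dist Y (snd p) (snd q)))
        (fun n => (pts X (fst (unpair n)), pts Y (snd (unpair n)))).

(** Countable product prod_i X_i: metric sup_i 2^-i min(1, d_i), dense
    sequence of finitely-modified points: n codes (L, m) and the i-th
    coordinate (i < L) is r^i_{c_i} with c_i the i-th entry of the list
    coded by m; other coordinates are r^i_0. *)
Definition code_entry (m i : nat) : nat :=
  fst (unpair (Nat.iter i (fun t => snd (unpair t)) m)).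

Definition prodNS (Xs : nat -> space) : space :=
  Space (forall i, carrier (Xs i))
        (fun x y => real (Sup_seq (fun i =>
            Finite ((/ 2) ^ i * Rmin 1 (dist (Xs i) (x i) (y i))))))
        (fun n i => if Nat.ltb i (fst (unpair n))
                    then pts (Xs i) (code_entry (snd (unpair n)) i)
                    else pts (Xs i) 0%nat).

Definition Sigma01 (X : space) (A : carrier X -> Prop) : Prop :=
  exists W, re_set W /\ forall x, A x <-> exists s, W s /\ nbhd X s x.

Definition Pi01 (X : space) (A : carrier X -> Prop) : Prop :=
  Sigma01 X (fun x => ~ A x).

(** f : X -> Y is recursive (computable) iff the relation
    f(x) in N(Y,s) is Sigma^0_1 on X x N, i.e. uniformly in s,
    f^-1 N(Y,s) = union of the N(X,t) with <s,t> in a fixed r.e. set. *)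
Definition computable (X Y : space) (f : carrier X -> carrier Y) : Prop :=
  exists W, re_set W /\
    forall x s, nbhd Y s (f x) <-> exists t, W (pair s t) /\ nbhd X t x.

Definition pointclass : Type := forall X : space, (carrier X -> Prop) -> Prop.

Definition contains_Sigma01 (G : pointclass) : Prop :=
  forall X, is_RPS X -> forall A, Sigma01 X A -> G X A.
Definition contains_Pi01 (G : pointclass) : Prop :=
  forall X, is_RPS X -> forall A, Pi01 X A -> G X A.
Definition pc_closed_or (G : pointclass) : Prop :=
  forall X, is_RPS X -> forall A B, G X A -> G X B -> G X (fun x => A x \/ B x).
Definition pc_closed_and (G : pointclass) : Prop :=
  forall X, is_RPS X -> forall A B, G X A -> G X B -> G X (fun x => A x /\ B x).
Definition pc_closed_comp_subst (G : pointclass) : Prop :=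
  forall X Y, is_RPS X -> is_RPS Y -> forall (f : carrier X -> carrier Y) B,
    computable X Y f -> G Y B -> G X (fun x => B (f x)).

Definition forallN (G : pointclass) : pointclass :=
  fun X A => exists Q : carrier (prodS natS X) -> Prop,
    G (prodS natS X) Q /\ forall x, A x <-> forall n, Q (n, x).

Definition is_equiv {T : Type} (E : T -> T -> Prop) : Prop :=
  (forall x, E x x) /\ (forall x y, E x y -> E y x) /\
  (forall x y z, E x y -> E y z -> E x z).

Definition simple_graph {T : Type} (G : T -> T -> Prop) : Prop :=
  (forall x, ~ G x x) /\ (forall x y, G x y -> G y x).

Inductive gpath {T : Type} (G : T -> T -> Prop) : nat -> T -> T -> Prop :=
| gpath0 x : gpath G 0 x x
| gpathS n x y z : G x y -> gpath G n y z -> gpath G (S n) x z.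

Definition connected {T : Type} (G : T -> T -> Prop) (x y : T) : Prop :=
  exists n, gpath G n x y.

Definition graphing {T : Type} (G E : T -> T -> Prop) : Prop :=
  simple_graph G /\ forall x y, connected G x y <-> E x y.

Definition diam_le {T : Type} (G : T -> T -> Prop) (k : nat) : Prop :=
  forall x y, connected G x y -> exists n, (n <= k)%nat /\ gpath G n x y.

Definition has_diameter {T : Type} (G : T -> T -> Prop) (k : nat) : Prop :=
  diam_le G k /\ forall k', diam_le G k' -> (k <= k')%nat.

Definition graph_in (Gm : pointclass) (X : space)
    (G : carrier X -> carrier X -> Prop) : Prop :=
  Gm (prodS X X) (fun p => G (fst p) (snd p)).

Definition graphable (Gm : pointclass) (X : space)
    (E : carrier X -> carrier X -> Prop) : Prop :=
  exists G, graphing G E /\ graph_in Gm X G.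

Definition graphable_diam (Gm : pointclass) (X : space)
    (E : carrier X -> carrier X -> Prop) (k : nat) : Prop :=
  exists G, graphing G E /\ graph_in Gm X G /\ has_diameter G k.

Definition prod_rel {X Y : Type} (E : X -> X -> Prop) (F : Y -> Y -> Prop)
    (p q : X * Y) : Prop := E (fst p) (fst q) /\ F (snd p) (snd q).

Definition prodN_rel {Xs : nat -> Type} (Es : forall i, Xs i -> Xs i -> Prop)
    (x y : forall i, Xs i) : Prop := forall i, Es i (x i) (y i).

(* Given graphings G_X, G_Y of E, F, join two distinct points of X × Y when each coordinate
   either stays put or moves along an edge.  A path of length n in this graph is the same thing as
   a pair of lazy paths (paths allowed to pause) of length n in the factors, and lazy paths can be
   padded to any greater length.  Hence the graph is a graphing of E × F, diameter bounds k and l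
   of the factors give the bound max(k, l), and this is exact because each factor sits inside the
   product as a slice.  The same construction graphs ∏ E_i on ∏ X_i provided the diameters are
   uniformly bounded by m: any two equivalent points are then joined coordinatewise by lazy paths
   of the common length m.

   For definability, the product graph is
     p ≠ q  ∧  (G_X ∨ =)(p_1, q_1)  ∧  (G_Y ∨ =)(p_2, q_2),
   where ≠ is Σ⁰₁, = is Π⁰₁ and the coordinate maps are computable.  In the countable case the
   coordinatewise clause is, uniformly in i, the Γ relation G_i(x_i, y_i) ∨ x_i = y_i, so the
   graph is ∀^ℕΓ; for a constant family this uniformity is obtained by substituting the
   computable evaluation map (i, x, y) ↦ (x_i, y_i). *)

From Stdlib Require Import Arith Lia List Cantor Reals Lra.
From Stdlib Require Import Classical ClassicalEpsilon FunctionalExtensionality Eqdep_dec.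
From Coquelicot Require Import Rbar Lim_seq.
Import ListNotations.

Open Scope nat_scope.

(** * Mu-recursive programs *)

Fixpoint prf_nested_ind (P : prf -> Prop)
  (HZ : P PZero) (HS : P PSucc) (HP : forall i, P (PProj i))
  (HC : forall f gs, P f -> Forall P gs -> P (PComp f gs))
  (HR : forall f g, P f -> P g -> P (PRec f g))
  (HM : forall f, P f -> P (PMin f)) (p : prf) {struct p} : P p :=
  let IH := prf_nested_ind P HZ HS HP HC HR HM in
  match p with
  | PZero => HZ
  | PSucc => HS
  | PProj i => HP i
  | PComp f gs =>
      HC f gs (IH f)
        ((fix all (l : list prf) : Forall P l :=
            match l with
            | [] => Forall_nil P
            | g :: l' => Forall_cons g (IH g) (all l')
            end) gs)
  | PRec f g => HR f g (IH f) (IH g)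
  | PMin f => HM f (IH f)
  end.

Lemma eval_functional p v y y' : eval p v y -> eval p v y' -> y = y'.
Proof.
  revert v y y'; induction p as [| | |f gs IHf IHgs|f g IHf IHg|f IHf]
    using prf_nested_ind; intros v y y' Hy Hy'.
  - inversion Hy; inversion Hy'; congruence.
  - inversion Hy; inversion Hy'; congruence.
  - inversion Hy; inversion Hy'; congruence.
  - inversion Hy as [| | |? ? ? ws ? Hws Hf| | |]; subst.
    inversion Hy' as [| | |? ? ? ws' ? Hws' Hf'| | |]; subst.
    enough (ws = ws') by (subst; eauto).
    clear Hf Hf' Hy Hy'; revert ws ws' Hws Hws'.
    induction IHgs; intros ws ws' Hws Hws'; inversion Hws; inversion Hws'; subst;
      f_equal; eauto.
  - destruct v as [|n w]; [inversion Hy|].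
    revert y y' Hy Hy'; induction n; intros y y' Hy Hy'.
    + inversion Hy; inversion Hy'; subst; eauto.
    + inversion Hy; inversion Hy'; subst.
      assert (r = r0) by eauto; subst; eauto.
  - inversion Hy as [| | | | | |? ? ? Hz Hlt]; subst.
    inversion Hy' as [| | | | | |? ? ? Hz' Hlt']; subst.
    destruct (lt_eq_lt_dec y y') as [[Hl|]|Hl]; auto.
    + destruct (Hlt' _ Hl) as [k Hk]; discriminate (IHf _ _ _ Hz Hk).
    + destruct (Hlt _ Hl) as [k Hk]; discriminate (IHf _ _ _ Hz' Hk).
Qed.

Definition computes (p : prf) (F : list nat -> nat) : Prop := forall v, eval p v (F v).

Lemma computes_ext p F G : computes p F -> (forall v, F v = G v) -> computes p G.
Proof. intros Hp HFG v; rewrite <- HFG; apply Hp. Qed.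

Lemma evals_map gs Gs v : Forall2 computes gs Gs -> evals gs v (map (fun G => G v) Gs).
Proof. induction 1; constructor; auto. Qed.

Lemma computes_comp f gs F Gs : computes f F -> Forall2 computes gs Gs ->
  computes (PComp f gs) (fun v => F (map (fun G => G v) Gs)).
Proof. intros Hf Hgs v; econstructor; [apply evals_map, Hgs | apply Hf]. Qed.

Lemma computes_rec f g a bs F G A Bs :
  computes f F -> computes g G -> computes a A -> Forall2 computes bs Bs ->
  computes (PComp (PRec f g) (a :: bs))
    (fun v => let w := map (fun B => B v) Bs in
              nat_rect (fun _ => nat) (F w) (fun i r => G (i :: r :: w)) (A v)).
Proof.
  intros Hf Hg Ha Hbs v; econstructor; [constructor; [apply Ha | apply evals_map, Hbs]|].
  cbv zeta; induction (A v); cbn [nat_rect]; econstructor; eauto.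
Qed.

Lemma computes_zero : computes PZero (fun _ => 0).
Proof. intro; constructor. Qed.

Lemma computes_succ : computes PSucc (fun v => S (hd 0 v)).
Proof. intro; constructor. Qed.

Lemma computes_proj i : computes (PProj i) (fun v => nth i v 0).
Proof. intro; constructor. Qed.

(* Each verified program below is made [Opaque], so that [prog_combinators] does not unfold it. *)
Ltac prog_combinators :=
  repeat first
    [ apply computes_zero | apply computes_succ | apply computes_proj
    | apply Forall2_nil | apply Forall2_cons
    | apply computes_rec | apply computes_comp ].

Definition prf_add : prf := PComp (PRec (PProj 0) (PComp PSucc [PProj 1])) [PProj 0; PProj 1].

Lemma computes_add : computes prf_add (fun v => nth 0 v 0 + nth 1 v 0).
Proof.
  eapply computes_ext; [unfold prf_add; prog_combinators|].
  intro v; cbn; induction (nth 0 v 0); cbn; auto.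
Qed.

Opaque prf_add.

Definition prf_pred : prf := PComp (PRec PZero (PProj 0)) [PProj 0].

Lemma computes_pred : computes prf_pred (fun v => pred (nth 0 v 0)).
Proof.
  eapply computes_ext; [unfold prf_pred; prog_combinators|].
  intro v; cbn; destruct (nth 0 v 0); reflexivity.
Qed.

Opaque prf_pred.

Definition prf_sub : prf := PComp (PRec (PProj 0) (PComp prf_pred [PProj 1])) [PProj 1; PProj 0].

Lemma computes_sub : computes prf_sub (fun v => nth 0 v 0 - nth 1 v 0).
Proof.
  eapply computes_ext; [unfold prf_sub; prog_combinators; apply computes_pred|].
  intro v; cbn; generalize (nth 0 v 0).
  induction (nth 1 v 0) as [|b IHb]; intro a; cbn; [lia|].
  rewrite IHb; destruct (a - b) eqn:E; cbn; lia.
Qed.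

Opaque prf_sub.

Definition prf_mul : prf :=
  PComp (PRec PZero (PComp prf_add [PProj 1; PProj 2])) [PProj 0; PProj 1].

Lemma computes_mul : computes prf_mul (fun v => nth 0 v 0 * nth 1 v 0).
Proof.
  eapply computes_ext; [unfold prf_mul; prog_combinators; apply computes_add|].
  intro v; cbn; induction (nth 0 v 0); cbn; lia.
Qed.

Opaque prf_mul.

Definition prf_pow2 : prf :=
  PComp (PRec (PComp PSucc [PZero]) (PComp prf_add [PProj 1; PProj 1])) [PProj 0].

Lemma computes_pow2 : computes prf_pow2 (fun v => 2 ^ nth 0 v 0).
Proof.
  eapply computes_ext; [unfold prf_pow2; prog_combinators; apply computes_add|].
  intro v; cbn; induction (nth 0 v 0); cbn; lia.
Qed.

Opaque prf_pow2.

(* [tri n = n (n + 1) / 2], in the form used by [Cantor.to_nat]. *)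
Definition tri (n : nat) : nat := nat_rec _ 0 (fun i m => S i + m) n.

Lemma to_nat_tri a b : to_nat (a, b) = b + tri (b + a).
Proof. reflexivity. Qed.

Lemma tri_mono a b : a <= b -> tri a <= tri b.
Proof. induction 1; [lia|]. change (tri (S m)) with (S m + tri m); lia. Qed.

Definition prf_tri : prf :=
  PComp (PRec PZero (PComp prf_add [PComp PSucc [PProj 0]; PProj 1])) [PProj 0].

Lemma computes_tri : computes prf_tri (fun v => tri (nth 0 v 0)).
Proof.
  eapply computes_ext; [unfold prf_tri; prog_combinators; apply computes_add|].
  intro v; cbn; induction (nth 0 v 0); cbn; auto.
Qed.

Opaque prf_tri.

Definition prf_pair : prf :=
  PComp prf_add [PProj 1; PComp prf_tri [PComp prf_add [PProj 1; PProj 0]]].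

Lemma computes_pair : computes prf_pair (fun v => pair (nth 0 v 0) (nth 1 v 0)).
Proof.
  eapply computes_ext;
    [unfold prf_pair; prog_combinators; first [apply computes_add | apply computes_tri]|].
  reflexivity.
Qed.

Opaque prf_pair.

Lemma unpair_tri n : n = snd (unpair n) + tri (snd (unpair n) + fst (unpair n)).
Proof. rewrite <- to_nat_tri, <- surjective_pairing; symmetry; apply cancel_to_of. Qed.

(* The diagonal [fst (unpair n) + snd (unpair n)] of [n] is the least [s] with [n < tri (s + 1)]. *)
Definition prf_diag : prf :=
  PMin (PComp prf_sub [PComp PSucc [PZero];
                       PComp prf_sub [PComp prf_tri [PComp PSucc [PProj 0]]; PProj 1]]).

Lemma computes_diag :
  computes prf_diag (fun v => fst (unpair (nth 0 v 0)) + snd (unpair (nth 0 v 0))).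
Proof.
  assert (Hbody : computes (PComp prf_sub [PComp PSucc [PZero];
                       PComp prf_sub [PComp prf_tri [PComp PSucc [PProj 0]]; PProj 1]])
                   (fun v => 1 - (tri (S (nth 0 v 0)) - nth 1 v 0))).
  { eapply computes_ext;
      [prog_combinators; first [apply computes_sub | apply computes_tri]|reflexivity]. }
  intro v; set (n := nth 0 v 0); pose proof (unpair_tri n) as En.
  set (a := fst (unpair n)) in *; set (b := snd (unpair n)) in *.
  rewrite (Nat.add_comm b a) in En.
  constructor.
  - pose proof (Hbody (a + b :: v)) as H; cbn [nth] in H; fold n in H.
    change (tri (S (a + b))) with (S (a + b) + tri (a + b)) in H.
    replace (1 - _) with 0 in H by lia; exact H.
  - intros m Hm; exists 0.
    pose proof (Hbody (m :: v)) as H; cbn [nth] in H; fold n in H.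
    assert (tri (S m) <= tri (a + b)) by (apply tri_mono; lia).
    replace (1 - _) with 1 in H by lia; exact H.
Qed.

Opaque prf_diag.

Definition prf_snd : prf := PComp prf_sub [PProj 0; PComp prf_tri [prf_diag]].

Lemma computes_snd : computes prf_snd (fun v => snd (unpair (nth 0 v 0))).
Proof.
  eapply computes_ext;
    [unfold prf_snd; prog_combinators;
     first [apply computes_sub | apply computes_tri | apply computes_diag]|].
  intro v; cbn [nth map]; pose proof (unpair_tri (nth 0 v 0)).
  rewrite (Nat.add_comm (fst _)); lia.
Qed.

Opaque prf_snd.

Definition prf_fst : prf := PComp prf_sub [prf_diag; prf_snd].

Lemma computes_fst : computes prf_fst (fun v => fst (unpair (nth 0 v 0))).
Proof.
  eapply computes_ext;
    [unfold prf_fst; prog_combinators;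
     first [apply computes_sub | apply computes_diag | apply computes_snd]|].
  intro v; cbn; lia.
Qed.

Opaque prf_fst.

Definition prf_entry : prf :=
  PComp prf_fst [PComp (PRec (PProj 0) (PComp prf_snd [PProj 1])) [PProj 1; PProj 0]].

Lemma computes_entry : computes prf_entry (fun v => code_entry (nth 0 v 0) (nth 1 v 0)).
Proof.
  eapply computes_ext;
    [unfold prf_entry; prog_combinators; first [apply computes_fst | apply computes_snd]|].
  intro v; cbn; unfold code_entry; do 2 f_equal.
Qed.

Opaque prf_entry.

(* For [code_entry], [single n a] codes the sequence that is [a] at position [n], [0] elsewhere. *)
Definition single (n a : nat) : nat := Nat.iter n (fun t => pair 0 t) (pair a 0).

Definition prf_single : prf :=
  PComp (PRec (PComp prf_pair [PProj 0; PZero]) (PComp prf_pair [PZero; PProj 1]))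
        [PProj 0; PProj 1].

Lemma computes_single : computes prf_single (fun v => single (nth 0 v 0) (nth 1 v 0)).
Proof.
  eapply computes_ext; [unfold prf_single; prog_combinators; apply computes_pair|].
  intro v; cbn; unfold single; induction (nth 0 v 0); cbn; congruence.
Qed.

Opaque prf_single.

(** * Arithmetical expressions and r.e. sets of codes *)

Fixpoint prf_const (n : nat) : prf :=
  match n with 0 => PZero | S n => PComp PSucc [prf_const n] end.

Lemma computes_const n : computes (prf_const n) (fun _ => n).
Proof.
  induction n; [apply computes_zero|].
  eapply computes_ext;
    [apply computes_comp; [apply computes_succ | repeat constructor; apply IHn]|].
  reflexivity.
Qed.

Inductive expr : Type :=
| EVar (i : nat)
| EConst (n : nat)
| EAdd (a b : expr)
| ESub (a b : expr)
| EMul (a b : expr)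
| EPow2 (a : expr)
| EPair (a b : expr)
| EFst (a : expr)
| ESnd (a : expr)
| EEntry (a b : expr)
| ESingle (a b : expr)
| ECall (p : prf) (F : list nat -> nat) (a b c d : expr).

Fixpoint esem (e : expr) (v : list nat) : nat :=
  match e with
  | EVar i => nth i v 0
  | EConst n => n
  | EAdd a b => esem a v + esem b v
  | ESub a b => esem a v - esem b v
  | EMul a b => esem a v * esem b v
  | EPow2 a => 2 ^ esem a v
  | EPair a b => pair (esem a v) (esem b v)
  | EFst a => fst (unpair (esem a v))
  | ESnd a => snd (unpair (esem a v))
  | EEntry a b => code_entry (esem a v) (esem b v)
  | ESingle a b => single (esem a v) (esem b v)
  | ECall _ F a b c d => F [esem a v; esem b v; esem c v; esem d v]
  end.

Fixpoint ecode (e : expr) : prf :=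
  match e with
  | EVar i => PProj i
  | EConst n => prf_const n
  | EAdd a b => PComp prf_add [ecode a; ecode b]
  | ESub a b => PComp prf_sub [ecode a; ecode b]
  | EMul a b => PComp prf_mul [ecode a; ecode b]
  | EPow2 a => PComp prf_pow2 [ecode a]
  | EPair a b => PComp prf_pair [ecode a; ecode b]
  | EFst a => PComp prf_fst [ecode a]
  | ESnd a => PComp prf_snd [ecode a]
  | EEntry a b => PComp prf_entry [ecode a; ecode b]
  | ESingle a b => PComp prf_single [ecode a; ecode b]
  | ECall p _ a b c d => PComp p [ecode a; ecode b; ecode c; ecode d]
  end.

Fixpoint ewf (e : expr) : Prop :=
  match e with
  | EVar _ | EConst _ => True
  | EPow2 a | EFst a | ESnd a => ewf a
  | EAdd a b | ESub a b | EMul a b | EPair a b | EEntry a b | ESingle a b => ewf a /\ ewf b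
  | ECall p F a b c d => computes p F /\ ewf a /\ ewf b /\ ewf c /\ ewf d
  end.

Lemma ecode_computes e : ewf e -> computes (ecode e) (esem e).
Proof.
  induction e; cbn [ewf ecode]; intro W;
    repeat match goal with IH : ewf ?a -> _ |- _ => specialize (IH ltac:(tauto)) end;
    try (eapply computes_ext;
         [ apply computes_comp;
           [ first [ apply computes_add | apply computes_sub | apply computes_mul
                   | apply computes_pow2 | apply computes_pair | apply computes_fst
                   | apply computes_snd | apply computes_entry | apply computes_single
                   | exact (proj1 W) ]
           | repeat constructor; eassumption ]
         | reflexivity ]).
  - apply computes_proj.
  - apply computes_const.
Qed.

Lemma re_set_of_expr e : ewf e -> re_set (fun n => exists w, esem e [w; n] <> 0).
Proof.
  intro W; exists (PMin (ecode (ESub (EConst 1) e))).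
  assert (C : computes (ecode (ESub (EConst 1) e)) (esem (ESub (EConst 1) e)))
    by (apply ecode_computes; cbn; auto).
  intro n; split.
  - intro Hex.
    destruct (Wf_nat.dec_inh_nat_subset_has_unique_least_element
                (fun w => esem e [w; n] <> 0)) as [w [[Hw Hleast] _]];
      [intro w; destruct (Nat.eq_dec (esem e [w; n]) 0); auto | exact Hex |].
    exists w; constructor.
    + pose proof (C [w; n]) as Cw; cbn [esem] in Cw.
      replace (1 - esem e [w; n]) with 0 in Cw by lia; exact Cw.
    + intros m Hm; exists 0.
      pose proof (C [m; n]) as Cm; cbn [esem] in Cm.
      destruct (Nat.eq_dec (esem e [m; n]) 0) as [E|E]; [|specialize (Hleast m E); lia].
      rewrite E in Cm; exact Cm.
  - intros [y Hy]; inversion Hy as [| | | | | |? ? ? Hz _]; subst.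
    exists y; pose proof (eval_functional _ _ _ _ Hz (C (y :: [n]))) as D.
    cbn [esem nth] in D; lia.
Qed.

Lemma recursive_rel_of_expr e (P : list nat -> Prop) : ewf e ->
  (forall v, (P v -> esem e v = 1) /\ (~ P v -> esem e v = 0)) -> recursive_rel P.
Proof.
  intros W H; exists (ecode e); intro v; destruct (H v) as [H1 H2].
  split; intro; [rewrite <- H1 | rewrite <- H2]; auto; apply ecode_computes, W.
Qed.

Definition chi (P : list nat -> Prop) (v : list nat) : nat :=
  if excluded_middle_informative (P v) then 1 else 0.

Lemma chi_spec P v : (P v /\ chi P v = 1) \/ (~ P v /\ chi P v = 0).
Proof. unfold chi; destruct (excluded_middle_informative (P v)); auto. Qed.

Lemma recursive_rel_chi P : recursive_rel P -> exists p, computes p (chi P).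
Proof.
  intros [p Hp]; exists p; intro v; unfold chi.
  destruct (excluded_middle_informative (P v)); apply Hp; auto.
Qed.

Definition ELt (a b : expr) : expr := ESub (EConst 1) (ESub (EConst 1) (ESub b a)).
Definition ELe (a b : expr) : expr := ELt a (EAdd b (EConst 1)).
Definition ENot (a : expr) : expr := ESub (EConst 1) a.
Definition EEq (a b : expr) : expr := EMul (ELe a b) (ELe b a).

Lemma esem_ELt a b v : esem (ELt a b) v = if esem a v <? esem b v then 1 else 0.
Proof. cbn [ELt esem]; destruct (Nat.ltb_spec (esem a v) (esem b v)); lia. Qed.

Lemma esem_ELe a b v : esem (ELe a b) v = if esem a v <=? esem b v then 1 else 0.
Proof. cbn [ELe ELt esem]; destruct (Nat.leb_spec (esem a v) (esem b v)); lia. Qed.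

Lemma esem_EEq a b v : esem (EEq a b) v = if esem a v =? esem b v then 1 else 0.
Proof.
  cbn [EEq esem]; rewrite !esem_ELe.
  destruct (Nat.eqb_spec (esem a v) (esem b v)), (Nat.leb_spec (esem a v) (esem b v)),
    (Nat.leb_spec (esem b v) (esem a v)); lia.
Qed.

Lemma fst_unpair_pair a b : fst (unpair (pair a b)) = a.
Proof. unfold unpair, pair; rewrite cancel_of_to; reflexivity. Qed.

Lemma snd_unpair_pair a b : snd (unpair (pair a b)) = b.
Proof. unfold unpair, pair; rewrite cancel_of_to; reflexivity. Qed.

Ltac unpair_simpl := repeat progress rewrite ?fst_unpair_pair, ?snd_unpair_pair.
Ltac unpair_simpl_in H := repeat progress rewrite ?fst_unpair_pair, ?snd_unpair_pair in H.

(** * Recursive Polish spaces and their finite products *)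

Open Scope R_scope.

Notation u1 n := (fst (unpair n)).
Notation u2 n := (snd (unpair n)).

Lemma INR_S_pos k : 0 < INR (S k).
Proof. apply lt_0_INR; lia. Qed.

Lemma rat_of_lt_iff m k m' k' : rat_of m k < rat_of m' k' <-> (m * S k' < m' * S k)%nat.
Proof.
  unfold rat_of; pose proof (INR_S_pos k); pose proof (INR_S_pos k').
  split; intro Hlt.
  - apply INR_lt; rewrite !mult_INR.
    apply (Rmult_lt_compat_r (INR (S k) * INR (S k'))) in Hlt; [|nra].
    field_simplify in Hlt; lra.
  - apply lt_INR in Hlt; rewrite !mult_INR in Hlt.
    apply (Rmult_lt_reg_r (INR (S k) * INR (S k'))); [nra|].
    field_simplify; lra.
Qed.

Lemma rat_of_le_iff m k m' k' : rat_of m k <= rat_of m' k' <-> (m * S k' <= m' * S k)%nat.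
Proof.
  split; intro H.
  - destruct (le_lt_dec (m * S k') (m' * S k)) as [|Hlt]; auto.
    apply rat_of_lt_iff in Hlt; lra.
  - destruct (Rle_lt_dec (rat_of m k) (rat_of m' k')) as [|Hlt]; auto.
    apply rat_of_lt_iff in Hlt; lia.
Qed.

Lemma rat_of_0 k : rat_of 0 k = 0.
Proof. unfold rat_of, Rdiv; cbn; ring. Qed.

Lemma rat_of_1_0 : rat_of 1 0 = 1.
Proof. unfold rat_of; cbn; field. Qed.

Lemma rat_of_ge0 m k : 0 <= rat_of m k.
Proof.
  unfold rat_of, Rdiv; apply Rmult_le_pos; [apply pos_INR |].
  left; apply Rinv_0_lt_compat, INR_S_pos.
Qed.

Lemma rat_of_gt0 m k : (0 < m)%nat -> 0 < rat_of m k.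
Proof. intro; apply Rdiv_lt_0_compat; [apply lt_0_INR; auto | apply INR_S_pos]. Qed.

Lemma rat_of_pow2 n m k : rat_of (2 ^ n * m) k = 2 ^ n * rat_of m k.
Proof.
  unfold rat_of, Rdiv; rewrite mult_INR, pow_INR.
  replace (INR 2) with 2 by (cbn; ring); ring.
Qed.

Lemma rat_of_sub n m k m' k' : (2 ^ n * m' * (k + 1) <= m * (k' + 1))%nat ->
  rat_of (m * (k' + 1) - 2 ^ n * m' * (k + 1)) ((k + 1) * (k' + 1) - 1) =
  rat_of m k - 2 ^ n * rat_of m' k'.
Proof.
  intro H; unfold rat_of.
  replace (S ((k + 1) * (k' + 1) - 1)) with ((k + 1) * (k' + 1))%nat by nia.
  rewrite minus_INR by auto; rewrite !mult_INR, !plus_INR, pow_INR.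
  replace (INR 2) with 2 by (cbn; ring); replace (INR 1) with 1 by reflexivity.
  rewrite !S_INR.
  pose proof (pos_INR k); pose proof (pos_INR k'); field; lra.
Qed.

Lemma rat_of_small eps : 0 < eps -> exists k, rat_of 1 k < eps /\ rat_of 1 k <= 1.
Proof.
  intro He; destruct (archimed_cor1 eps He) as [N [HN HN0]].
  exists (pred N); unfold rat_of; replace (S (pred N)) with N by lia.
  change (INR 1) with 1; unfold Rdiv; rewrite Rmult_1_l.
  split; [exact HN|].
  apply Rmult_le_reg_r with (INR N); [apply lt_0_INR; lia|].
  assert (1 <= INR N) by (apply (le_INR 1); lia).
  field_simplify; lra.
Qed.

Section MetricFacts.

Variable X : space.
Hypothesis HX : is_metric X.

Lemma dist_ge0 x y : 0 <= dist X x y.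
Proof. apply HX. Qed.

Lemma dist_refl x : dist X x x = 0.
Proof. apply HX; reflexivity. Qed.

Lemma dist_eq0 x y : dist X x y = 0 -> x = y.
Proof. apply HX. Qed.

Lemma dist_sym x y : dist X x y = dist X y x.
Proof. apply HX. Qed.

Lemma dist_triangle x y z : dist X x z <= dist X x y + dist X y z.
Proof. apply HX. Qed.

Lemma dist_gt0 x y : x <> y -> 0 < dist X x y.
Proof.
  intro Hxy; destruct (dist_ge0 x y) as [|E]; auto.
  symmetry in E; contradiction (Hxy (dist_eq0 _ _ E)).
Qed.

End MetricFacts.

Lemma RPS_metric X : is_RPS X -> is_metric X.
Proof. intros [H _]; exact H. Qed.

Lemma RPS_dense_ball X : is_RPS X ->
  forall x m k, (0 < m)%nat -> exists i, dist X (pts X i) x < rat_of m k.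
Proof.
  intros (HM & _ & HD & _) x m k Hm.
  destruct (HD x (rat_of m k) (rat_of_gt0 m k Hm)) as [i Hi].
  exists i; rewrite (dist_sym X HM); exact Hi.
Qed.

Definition pts_dist_lt (X : space) (v : list nat) : Prop :=
  dist X (pts X (nth 0 v 0%nat)) (pts X (nth 1 v 0%nat)) < rat_of (nth 2 v 0%nat) (nth 3 v 0%nat).

Definition pts_dist_le (X : space) (v : list nat) : Prop :=
  dist X (pts X (nth 0 v 0%nat)) (pts X (nth 1 v 0%nat)) <= rat_of (nth 2 v 0%nat) (nth 3 v 0%nat).

Lemma RPS_dist_lt_prf X : is_RPS X -> exists p, computes p (chi (pts_dist_lt X)).
Proof. intros (_ & _ & _ & H & _); apply recursive_rel_chi, H. Qed.

Lemma RPS_dist_le_prf X : is_RPS X -> exists p, computes p (chi (pts_dist_le X)).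
Proof. intros (_ & _ & _ & _ & H); apply recursive_rel_chi, H. Qed.

Definition radius (s : nat) : R := rat_of (u1 (u2 s)) (u2 (u2 s)).

Lemma nbhd_iff X s x : nbhd X s x <-> dist X (pts X (u1 s)) x < radius s.
Proof.
  unfold nbhd, radius; destruct (unpair s) as [i t]; cbn [fst snd].
  destruct (unpair t); reflexivity.
Qed.

Lemma radius_code i m k : radius (pair i (pair m k)) = rat_of m k.
Proof. unfold radius; unpair_simpl; reflexivity. Qed.

Lemma radius_of_ball X s c x : is_metric X -> dist X c x < radius s -> (0 < u1 (u2 s))%nat.
Proof.
  intros HM H; pose proof (dist_ge0 X HM c x); unfold radius in H.
  destruct (u1 (u2 s)); [rewrite rat_of_0 in H; lra | lia].
Qed.

Lemma radius_le1 s : (u1 (u2 s) <= u2 (u2 s) + 1)%nat -> radius s <= 1.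
Proof. intro; unfold radius; rewrite <- rat_of_1_0; apply rat_of_le_iff; lia. Qed.

Lemma Sigma01_of_expr X (A : carrier X -> Prop) e : ewf e ->
  (forall x, A x <-> exists s, (exists w, esem e [w; s] <> 0%nat) /\ nbhd X s x) ->
  Sigma01 X A.
Proof. intros W H; eexists; split; [apply re_set_of_expr, W | exact H]. Qed.

Lemma computable_of_expr X Y (f : carrier X -> carrier Y) e : ewf e ->
  (forall x s, nbhd Y s (f x) <->
     exists t, (exists w, esem e [w; pair s t] <> 0%nat) /\ nbhd X t x) ->
  computable X Y f.
Proof. intros W H; eexists; split; [apply re_set_of_expr, W | exact H]. Qed.

Lemma natS_metric : is_metric natS.
Proof.
  unfold is_metric; cbn; split; [|split; [|split]].
  - intros a b; destruct (Nat.eqb a b); lra.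
  - intros a b; split.
    + destruct (Nat.eqb_spec a b); auto; lra.
    + intros ->; rewrite Nat.eqb_refl; reflexivity.
  - intros a b; destruct (Nat.eqb_spec a b), (Nat.eqb_spec b a); congruence.
  - intros a b c; destruct (Nat.eqb_spec a c), (Nat.eqb_spec a b), (Nat.eqb_spec b c);
      subst; try lra; congruence.
Qed.

Lemma natS_dist_lt1 a b q : dist natS a b < q -> q <= 1 -> a = b.
Proof. cbn; destruct (Nat.eqb_spec a b); auto; lra. Qed.

Lemma natS_RPS : is_RPS natS.
Proof.
  split; [exact natS_metric|]; split; [|split; [|split]].
  - intros u Hu; destruct (Hu (1 / 2)) as [N HN]; [lra|].
    exists (u N); intros eps He; exists N; intros n Hn.
    specialize (HN n N Hn (le_n N)); cbn in *; destruct (Nat.eqb (u n) (u N)); lra.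
  - intros a eps He; exists a; cbn; rewrite Nat.eqb_refl; exact He.
  - apply (recursive_rel_of_expr
             (EAdd (EMul (EEq (EVar 0) (EVar 1)) (ELt (EConst 0) (EVar 2)))
                   (EMul (ENot (EEq (EVar 0) (EVar 1)))
                         (ELt (EAdd (EVar 3) (EConst 1)) (EVar 2)))));
      [cbn; tauto|].
    intro v; cbn [esem ENot]; rewrite esem_EEq, !esem_ELt; cbn [esem pts natS dist].
    destruct (Nat.eqb_spec (nth 0 v 0%nat) (nth 1 v 0%nat)).
    + rewrite <- (rat_of_0 0), rat_of_lt_iff.
      destruct (Nat.ltb_spec 0 (nth 2 v 0%nat)); split; intro; lia.
    + rewrite <- rat_of_1_0, rat_of_lt_iff.
      destruct (Nat.ltb_spec (nth 3 v 0%nat + 1) (nth 2 v 0%nat)); split; intro; lia.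
  - apply (recursive_rel_of_expr
             (EAdd (EEq (EVar 0) (EVar 1))
                   (EMul (ENot (EEq (EVar 0) (EVar 1)))
                         (ELe (EAdd (EVar 3) (EConst 1)) (EVar 2)))));
      [cbn; tauto|].
    intro v; cbn [esem ENot]; rewrite esem_EEq, esem_ELe; cbn [esem pts natS dist].
    destruct (Nat.eqb_spec (nth 0 v 0%nat) (nth 1 v 0%nat)).
    + pose proof (rat_of_ge0 (nth 2 v 0%nat) (nth 3 v 0%nat)); split; intro; [lia | lra].
    + rewrite <- rat_of_1_0, rat_of_le_iff.
      destruct (Nat.leb_spec (nth 3 v 0%nat + 1) (nth 2 v 0%nat)); split; intro; lia.
Qed.

Lemma Rmax_le_iff a b c : Rmax a b <= c <-> a <= c /\ b <= c.
Proof.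
  split; [intro H; split; eapply Rle_trans; eauto; [apply Rmax_l | apply Rmax_r]|].
  intros []; apply Rmax_lub; auto.
Qed.

Section ProductSpace.

Variables X Y : space.

Lemma dist_prodS_pts_lt c x y q : dist (prodS X Y) (pts (prodS X Y) c) (x, y) < q <->
  dist X (pts X (u1 c)) x < q /\ dist Y (pts Y (u2 c)) y < q.
Proof. apply Rmax_Rlt. Qed.

Lemma nbhd_prodS s x y : nbhd (prodS X Y) s (x, y) <->
  dist X (pts X (u1 (u1 s))) x < radius s /\ dist Y (pts Y (u2 (u1 s))) y < radius s.
Proof. rewrite nbhd_iff; apply dist_prodS_pts_lt. Qed.

Lemma prodS_metric : is_metric X -> is_metric Y -> is_metric (prodS X Y).
Proof.
  intros MX MY; split; [|split; [|split]]; cbn.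
  - intros p q; eapply Rle_trans; [apply (dist_ge0 X MX) | apply Rmax_l].
  - intros [a b] [c d]; cbn; split.
    + intro H; pose proof (Rmax_l (dist X a c) (dist Y b d));
        pose proof (Rmax_r (dist X a c) (dist Y b d)).
      pose proof (dist_ge0 X MX a c); pose proof (dist_ge0 Y MY b d).
      f_equal; [apply (dist_eq0 X MX) | apply (dist_eq0 Y MY)]; lra.
    + intro E; inversion E; subst; rewrite (dist_refl X MX), (dist_refl Y MY).
      apply Rmax_left; lra.
  - intros p q; rewrite (dist_sym X MX), (dist_sym Y MY); reflexivity.
  - intros p q r; apply Rmax_lub.
    + eapply Rle_trans; [apply (dist_triangle X MX _ (fst q))|].
      apply Rplus_le_compat; apply Rmax_l.
    + eapply Rle_trans; [apply (dist_triangle Y MY _ (snd q))|].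
      apply Rplus_le_compat; apply Rmax_r.
Qed.

Lemma prodS_complete : is_complete X -> is_complete Y -> is_complete (prodS X Y).
Proof.
  intros CX CY u Hu.
  destruct (CX (fun n => fst (u n))) as [l1 H1].
  { intros eps He; destruct (Hu eps He) as [N HN]; exists N; intros m n Hm Hn.
    eapply Rle_lt_trans; [apply Rmax_l | apply (HN m n Hm Hn)]. }
  destruct (CY (fun n => snd (u n))) as [l2 H2].
  { intros eps He; destruct (Hu eps He) as [N HN]; exists N; intros m n Hm Hn.
    eapply Rle_lt_trans; [apply Rmax_r | apply (HN m n Hm Hn)]. }
  exists (l1, l2); intros eps He.
  destruct (H1 eps He) as [N1 HN1], (H2 eps He) as [N2 HN2].
  exists (Nat.max N1 N2); intros n Hn; apply Rmax_lub_lt; [apply HN1 | apply HN2]; lia.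
Qed.

Lemma prodS_dense : is_dense_seq X -> is_dense_seq Y -> is_dense_seq (prodS X Y).
Proof.
  intros DX DY [a b] eps He.
  destruct (DX a eps He) as [i Hi], (DY b eps He) as [j Hj].
  exists (pair i j); cbn [dist pts prodS fst snd]; unpair_simpl; apply Rmax_lub_lt; auto.
Qed.

Lemma recursive_rel_unpair_and (P Q R : list nat -> Prop) :
  recursive_rel P -> recursive_rel Q ->
  (forall v, R v <-> P [u1 (nth 0 v 0%nat); u1 (nth 1 v 0%nat); nth 2 v 0%nat; nth 3 v 0%nat] /\
                     Q [u2 (nth 0 v 0%nat); u2 (nth 1 v 0%nat); nth 2 v 0%nat; nth 3 v 0%nat]) ->
  recursive_rel R.
Proof.
  intros HP HQ HR.
  destruct (recursive_rel_chi _ HP) as [p Hp], (recursive_rel_chi _ HQ) as [q Hq].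
  apply (recursive_rel_of_expr
           (EMul (ECall p (chi P) (EFst (EVar 0)) (EFst (EVar 1)) (EVar 2) (EVar 3))
                 (ECall q (chi Q) (ESnd (EVar 0)) (ESnd (EVar 1)) (EVar 2) (EVar 3))));
    [cbn; tauto|].
  intro v; rewrite HR; cbn [esem].
  match goal with |- context [(chi P ?l1 * chi Q ?l2)%nat] =>
    destruct (chi_spec P l1) as [[A1 ->]|[A1 ->]], (chi_spec Q l2) as [[A2 ->]|[A2 ->]] end;
    split; intros; try tauto; lia.
Qed.

Lemma prodS_RPS : is_RPS X -> is_RPS Y -> is_RPS (prodS X Y).
Proof.
  intros (MX & CX & DX & LX & EX) (MY & CY & DY & LY & EY).
  split; [apply prodS_metric; auto|]; split; [apply prodS_complete; auto|].
  split; [apply prodS_dense; auto|]; split.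
  - apply (recursive_rel_unpair_and _ _ _ LX LY); intro v; apply Rmax_Rlt.
  - apply (recursive_rel_unpair_and _ _ _ EX EY); intro v; apply Rmax_le_iff.
Qed.

End ProductSpace.

Lemma rat_of_double m k : rat_of (2 * m) k = 2 * rat_of m k.
Proof. change (2 * m)%nat with (2 ^ 1 * m)%nat; rewrite rat_of_pow2; ring. Qed.

Lemma radius_eq s t : u2 s = u2 t -> radius s = radius t.
Proof. unfold radius; intros ->; reflexivity. Qed.

Lemma neq_Sigma01 Z : is_RPS Z -> Sigma01 (prodS Z Z) (fun p => fst p <> snd p).
Proof.
  intro HZ; pose proof (RPS_metric Z HZ) as M; destruct (RPS_dist_le_prf Z HZ) as [p Hp].
  set (s := EVar 1).
  set (e := ENot (ECall p (chi (pts_dist_le Z)) (EFst (EFst s)) (ESnd (EFst s))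
                        (EMul (EConst 2) (EFst (ESnd s))) (ESnd (ESnd s)))).
  assert (He : forall w s, esem e [w; s] <> 0%nat <->
            ~ dist Z (pts Z (u1 (u1 s))) (pts Z (u2 (u1 s))) <= 2 * radius s).
  { intros w c; cbn [e ENot esem nth].
    match goal with |- context [chi ?P ?l] => destruct (chi_spec P l) as [[A ->]|[A ->]] end;
      unfold pts_dist_le in A; cbn [nth] in A; rewrite rat_of_double in A;
      unfold radius; split; intro; try tauto; lia. }
  apply (Sigma01_of_expr _ _ e); [cbn; tauto|].
  intros [z z']; cbn [fst snd]; split.
  - intro Hne; pose proof (dist_gt0 Z M z z' Hne).
    destruct (rat_of_small (dist Z z z' / 4)) as [k [Hk _]]; [lra|].
    destruct (RPS_dense_ball Z HZ z 1 k) as [i Hi]; [lia|].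
    destruct (RPS_dense_ball Z HZ z' 1 k) as [j Hj]; [lia|].
    exists (pair (pair i j) (pair 1 k)); split.
    + exists 0%nat; apply He; rewrite radius_code; unpair_simpl; intro Hle.
      pose proof (dist_triangle Z M z (pts Z i) z').
      pose proof (dist_triangle Z M (pts Z i) (pts Z j) z').
      rewrite (dist_sym Z M z (pts Z i)) in *; lra.
    + apply nbhd_prodS; rewrite radius_code; unpair_simpl; auto.
  - intros [c [[w Hw] Hc]] <-; apply He in Hw; apply nbhd_prodS in Hc as [H1 H2].
    apply Hw; pose proof (dist_triangle Z M (pts Z (u1 (u1 c))) z (pts Z (u2 (u1 c)))).
    rewrite (dist_sym Z M z (pts Z (u2 (u1 c)))) in *; lra.
Qed.

Lemma snd_computable N W : is_RPS N -> is_RPS W -> computable (prodS N W) W snd.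
Proof.
  intros HN HW; pose proof (RPS_metric W HW) as M.
  apply (computable_of_expr _ _ _
           (EMul (EEq (ESnd (EFst (ESnd (EVar 1)))) (EFst (EFst (EVar 1))))
                 (EEq (ESnd (ESnd (EVar 1))) (ESnd (EFst (EVar 1)))))); [cbn; tauto|].
  intros [n x] s; cbn [snd]; rewrite nbhd_iff; split.
  - intro H; pose proof (radius_of_ball W s _ x M H) as Hm.
    destruct (RPS_dense_ball N HN n _ (u2 (u2 s)) Hm) as [a Ha].
    exists (pair (pair a (u1 s)) (u2 s)); split.
    + exists 0%nat; cbn [esem]; rewrite !esem_EEq; cbn [esem nth]; unpair_simpl.
      rewrite !Nat.eqb_refl; lia.
    + apply nbhd_prodS; rewrite (radius_eq _ s) by (unpair_simpl; reflexivity).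
      unpair_simpl; auto.
  - intros [t [[w Hw] Ht]]; cbn [esem] in Hw; rewrite !esem_EEq in Hw; cbn [esem nth] in Hw.
    unpair_simpl_in Hw; apply nbhd_prodS in Ht as [_ Ht].
    destruct (Nat.eqb_spec (u2 (u1 t)) (u1 s)), (Nat.eqb_spec (u2 t) (u2 s)); try lia.
    rewrite <- (radius_eq t s) by auto; congruence.
Qed.

Section PairProjections.

Variables X Y : space.
Hypotheses (HX : is_RPS X) (HY : is_RPS Y).

Lemma fst_pair_computable :
  computable (prodS (prodS X Y) (prodS X Y)) (prodS X X) (fun p => (fst (fst p), fst (snd p))).
Proof.
  pose proof (RPS_metric X HX) as M.
  apply (computable_of_expr _ _ _
           (EMul (EMul (EEq (EFst (EFst (EFst (ESnd (EVar 1))))) (EFst (EFst (EFst (EVar 1)))))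
                       (EEq (EFst (ESnd (EFst (ESnd (EVar 1))))) (ESnd (EFst (EFst (EVar 1))))))
                 (EEq (ESnd (ESnd (EVar 1))) (ESnd (EFst (EVar 1)))))); [cbn; tauto|].
  intros [[x y] [x' y']] s; cbn [fst snd]; rewrite nbhd_prodS; split.
  - intros [H1 H2]; pose proof (radius_of_ball X s _ x M H1) as Hm.
    destruct (RPS_dense_ball Y HY y _ (u2 (u2 s)) Hm) as [a Ha].
    destruct (RPS_dense_ball Y HY y' _ (u2 (u2 s)) Hm) as [b Hb].
    exists (pair (pair (pair (u1 (u1 s)) a) (pair (u2 (u1 s)) b)) (u2 s)); split.
    + exists 0%nat; cbn [esem]; rewrite !esem_EEq; cbn [esem nth]; unpair_simpl.
      rewrite !Nat.eqb_refl; lia.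
    + apply nbhd_prodS; rewrite (radius_eq _ s) by (unpair_simpl; reflexivity).
      unpair_simpl; split; apply dist_prodS_pts_lt; unpair_simpl; auto.
  - intros [t [[w Hw] Ht]]; cbn [esem] in Hw; rewrite !esem_EEq in Hw; cbn [esem nth] in Hw.
    unpair_simpl_in Hw; apply nbhd_prodS in Ht as [Ht1 Ht2].
    apply dist_prodS_pts_lt in Ht1 as [Ht1 _]; apply dist_prodS_pts_lt in Ht2 as [Ht2 _].
    destruct (Nat.eqb_spec (u1 (u1 (u1 t))) (u1 (u1 s))),
      (Nat.eqb_spec (u1 (u2 (u1 t))) (u2 (u1 s))), (Nat.eqb_spec (u2 t) (u2 s)); try lia.
    rewrite <- (radius_eq t s) by auto; split; congruence.
Qed.

Lemma snd_pair_computable :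
  computable (prodS (prodS X Y) (prodS X Y)) (prodS Y Y) (fun p => (snd (fst p), snd (snd p))).
Proof.
  pose proof (RPS_metric Y HY) as M.
  apply (computable_of_expr _ _ _
           (EMul (EMul (EEq (ESnd (EFst (EFst (ESnd (EVar 1))))) (EFst (EFst (EFst (EVar 1)))))
                       (EEq (ESnd (ESnd (EFst (ESnd (EVar 1))))) (ESnd (EFst (EFst (EVar 1))))))
                 (EEq (ESnd (ESnd (EVar 1))) (ESnd (EFst (EVar 1)))))); [cbn; tauto|].
  intros [[x y] [x' y']] s; cbn [fst snd]; rewrite nbhd_prodS; split.
  - intros [H1 H2]; pose proof (radius_of_ball Y s _ y M H1) as Hm.
    destruct (RPS_dense_ball X HX x _ (u2 (u2 s)) Hm) as [a Ha].
    destruct (RPS_dense_ball X HX x' _ (u2 (u2 s)) Hm) as [b Hb].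
    exists (pair (pair (pair a (u1 (u1 s))) (pair b (u2 (u1 s)))) (u2 s)); split.
    + exists 0%nat; cbn [esem]; rewrite !esem_EEq; cbn [esem nth]; unpair_simpl.
      rewrite !Nat.eqb_refl; lia.
    + apply nbhd_prodS; rewrite (radius_eq _ s) by (unpair_simpl; reflexivity).
      unpair_simpl; split; apply dist_prodS_pts_lt; unpair_simpl; auto.
  - intros [t [[w Hw] Ht]]; cbn [esem] in Hw; rewrite !esem_EEq in Hw; cbn [esem nth] in Hw.
    unpair_simpl_in Hw; apply nbhd_prodS in Ht as [Ht1 Ht2].
    apply dist_prodS_pts_lt in Ht1 as [_ Ht1]; apply dist_prodS_pts_lt in Ht2 as [_ Ht2].
    destruct (Nat.eqb_spec (u2 (u1 (u1 t))) (u1 (u1 s))),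
      (Nat.eqb_spec (u2 (u2 (u1 t))) (u2 (u1 s))), (Nat.eqb_spec (u2 t) (u2 s)); try lia.
    rewrite <- (radius_eq t s) by auto; split; congruence.
Qed.

End PairProjections.

(** * Graphings of products *)

Section Paths.

Context {T : Type}.
Implicit Types G R : T -> T -> Prop.

Definition lazy_edge G (a b : T) : Prop := G a b \/ a = b.

Lemma gpath_mono R R' n x y :
  (forall a b, R a b -> R' a b) -> gpath R n x y -> gpath R' n x y.
Proof. intros H P; induction P; econstructor; eauto. Qed.

Lemma gpath_0_inv R x y : gpath R 0 x y -> x = y.
Proof. intro P; inversion P; auto. Qed.

Lemma gpath_S_inv R n x y : gpath R (S n) x y -> exists z, R x z /\ gpath R n z y.
Proof. intro P; inversion P; subst; eauto. Qed.

Lemma gpath_lazy G n x y : gpath G n x y -> gpath (lazy_edge G) n x y.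
Proof. apply gpath_mono; left; auto. Qed.

Lemma gpath_lazy_pad G n N x y :
  gpath (lazy_edge G) n x y -> (n <= N)%nat -> gpath (lazy_edge G) N x y.
Proof.
  intros P HnN; replace N with (N - n + n)%nat by lia.
  induction (N - n)%nat as [|j IHj]; cbn;
    [exact P | econstructor; [right; reflexivity | exact IHj]].
Qed.

Lemma gpath_of_lazy G n x y : gpath (lazy_edge G) n x y ->
  exists n', (n' <= n)%nat /\ gpath G n' x y.
Proof.
  induction 1 as [x|n x z y [H|<-] P [n' [Hn' P']]].
  - exists 0%nat; split; [lia | constructor].
  - exists (S n'); split; [lia | econstructor; eauto].
  - exists n'; split; [lia | exact P'].
Qed.

Lemma connected_lazy G x y : connected G x y <-> exists n, gpath (lazy_edge G) n x y.
Proof.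
  split; intros [n P]; [exists n; apply gpath_lazy, P|].
  destruct (gpath_of_lazy G n x y P) as [n' [_ P']]; exists n'; exact P'.
Qed.

(* Lazy paths can be padded, so a diameter bound is a statement about lazy paths of one length. *)
Lemma diam_le_lazy G k :
  diam_le G k <-> forall x y, connected G x y -> gpath (lazy_edge G) k x y.
Proof.
  split; intros H x y Hxy.
  - destruct (H x y Hxy) as [n [Hn P]]; exact (gpath_lazy_pad G n k x y (gpath_lazy G n x y P) Hn).
  - apply gpath_of_lazy, H, Hxy.
Qed.

Lemma diam_le_mono G k k' : (k <= k')%nat -> diam_le G k -> diam_le G k'.
Proof.
  intros Hk D x y C; destruct (D x y C) as [n [Hn P]]; exists n; split; [lia | exact P].
Qed.

End Paths.

Lemma nat_bounded_attains_max (d : nat -> nat) B : (forall i, (d i <= B)%nat) ->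
  exists m, (forall i, (d i <= m)%nat) /\ exists i, d i = m.
Proof.
  induction B as [|B IHB]; intro H.
  - exists 0%nat; split; [auto | exists 0%nat; specialize (H 0%nat); lia].
  - destruct (classic (exists i, d i = S B)) as [E|E]; [exists (S B); auto|].
    apply IHB; intro i; specialize (H i).
    destruct (Nat.eq_dec (d i) (S B)); [exfalso; eauto | lia].
Qed.

Section ProductGraph.

Context {X Y : Type}.
Variables (GX : X -> X -> Prop) (GY : Y -> Y -> Prop).

Definition prod_graph (p q : X * Y) : Prop :=
  p <> q /\ lazy_edge GX (fst p) (fst q) /\ lazy_edge GY (snd p) (snd q).

Lemma prod_graph_simple : simple_graph GX -> simple_graph GY -> simple_graph prod_graph.
Proof.
  intros [_ SX] [_ SY]; split; [intros p []; auto|].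
  intros p q (Hpq & HX & HY); split; [auto|].
  split; [destruct HX | destruct HY]; [left | right | left | right]; auto.
Qed.

Lemma lazy_prod_graph_path n x x' y y' :
  gpath (lazy_edge prod_graph) n (x, y) (x', y') <->
  gpath (lazy_edge GX) n x x' /\ gpath (lazy_edge GY) n y y'.
Proof.
  split.
  - intro P; remember (x, y) as p; remember (x', y') as q.
    revert x y x' y' Heqp Heqq; induction P as [z|n p r q Hpr P IH]; intros x y x' y' -> Eq.
    + inversion Eq; split; constructor.
    + destruct r as [x1 y1]; destruct (IH x1 y1 x' y' eq_refl Eq).
      destruct Hpr as [(_ & H1 & H2)|E]; [split; econstructor; eauto|].
      inversion E; subst; split; econstructor; eauto; right; reflexivity.
  - revert x y; induction n as [|n IHn]; intros x y [P1 P2].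
    + rewrite (gpath_0_inv _ _ _ P1), (gpath_0_inv _ _ _ P2); constructor.
    + destruct (gpath_S_inv _ _ _ _ P1) as [x1 [S1 P1']].
      destruct (gpath_S_inv _ _ _ _ P2) as [y1 [S2 P2']].
      apply gpathS with (x1, y1); [|apply IHn; auto].
      destruct (classic ((x, y) = (x1, y1))); [right | left; split]; auto.
Qed.

Lemma connected_prod_graph x x' y y' :
  connected prod_graph (x, y) (x', y') <-> connected GX x x' /\ connected GY y y'.
Proof.
  rewrite !connected_lazy; split.
  - intros [n P]; apply lazy_prod_graph_path in P as [P1 P2]; eauto.
  - intros [[n1 P1] [n2 P2]]; exists (Nat.max n1 n2).
    apply lazy_prod_graph_path; split; (eapply gpath_lazy_pad; [eassumption | lia]).
Qed.

Lemma graphing_prod_graph (EX : X -> X -> Prop) (EY : Y -> Y -> Prop) :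
  graphing GX EX -> graphing GY EY -> graphing prod_graph (prod_rel EX EY).
Proof.
  intros [SX CX] [SY CY]; split; [apply prod_graph_simple; auto|].
  intros [x y] [x' y']; rewrite connected_prod_graph, CX, CY; reflexivity.
Qed.

Lemma diam_le_prod_graph k l : diam_le GX k -> diam_le GY l -> diam_le prod_graph (Nat.max k l).
Proof.
  rewrite !diam_le_lazy; intros DX DY [x y] [x' y'] C.
  apply connected_prod_graph in C as [C1 C2].
  apply lazy_prod_graph_path; split; (eapply gpath_lazy_pad; [eauto | lia]).
Qed.

Lemma diam_le_prod_graph_inv m (x0 : X) (y0 : Y) :
  diam_le prod_graph m -> diam_le GX m /\ diam_le GY m.
Proof.
  rewrite !diam_le_lazy; intro D; split; intros a b C.
  - assert (P : gpath (lazy_edge prod_graph) m (a, y0) (b, y0))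
      by (apply D, connected_prod_graph; split; [exact C | exists 0%nat; constructor]).
    apply lazy_prod_graph_path in P; apply P.
  - assert (P : gpath (lazy_edge prod_graph) m (x0, a) (x0, b))
      by (apply D, connected_prod_graph; split; [exists 0%nat; constructor | exact C]).
    apply lazy_prod_graph_path in P; apply P.
Qed.

Lemma has_diameter_prod_graph k l (x0 : X) (y0 : Y) :
  has_diameter GX k -> has_diameter GY l -> has_diameter prod_graph (Nat.max k l).
Proof.
  intros [DX MX] [DY MY]; split; [apply diam_le_prod_graph; auto|].
  intros m D; destruct (diam_le_prod_graph_inv m x0 y0 D) as [D1 D2].
  specialize (MX m D1); specialize (MY m D2); lia.
Qed.

End ProductGraph.

Section CountableProductGraph.

Context {I : nat -> Type}.
Variable Gs : forall i, I i -> I i -> Prop.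

Definition prodN_graph (x y : forall i, I i) : Prop :=
  x <> y /\ forall i, lazy_edge (Gs i) (x i) (y i).

Lemma prodN_graph_simple : (forall i, simple_graph (Gs i)) -> simple_graph prodN_graph.
Proof.
  intro S; split; [intros x []; auto|].
  intros x y [Hxy H]; split; [auto|]; intro i.
  destruct (H i); [left; apply (S i) | right]; auto.
Qed.

Lemma lazy_prodN_graph_path n x y :
  gpath (lazy_edge prodN_graph) n x y <-> forall i, gpath (lazy_edge (Gs i)) n (x i) (y i).
Proof.
  split.
  - intros P i; induction P as [|n x z y Hxz P IH]; [constructor|].
    econstructor; [|exact IH]; destruct Hxz as [[_ H]|<-]; [apply H | right; reflexivity].
  - revert x; induction n as [|n IHn]; intros x H.
    + replace y with x
        by (apply functional_extensionality_dep; intro i; apply (gpath_0_inv _ _ _ (H i))).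
      constructor.
    + set (step i := constructive_indefinite_description _ (gpath_S_inv _ _ _ _ (H i))).
      set (z i := proj1_sig (step i)).
      assert (Hz : forall i, lazy_edge (Gs i) (x i) (z i) /\ gpath (lazy_edge (Gs i)) n (z i) (y i))
        by (intro i; apply (proj2_sig (step i))).
      apply gpathS with z; [|apply IHn; apply Hz].
      destruct (classic (x = z)); [right | left; split]; auto; apply Hz.
Qed.

Lemma connected_prodN_graph_inv x y :
  connected prodN_graph x y -> forall i, connected (Gs i) (x i) (y i).
Proof.
  intros C i; apply connected_lazy in C as [n P]; apply connected_lazy.
  exists n; apply lazy_prodN_graph_path, P.
Qed.

(* Unlike the finite case, connected coordinates give a connected product only under a uniform
   bound on the path lengths. *)
Lemma lazy_prodN_graph_path_bounded m x y : (forall i, diam_le (Gs i) m) ->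
  (forall i, connected (Gs i) (x i) (y i)) -> gpath (lazy_edge prodN_graph) m x y.
Proof.
  intros D C; apply lazy_prodN_graph_path; intro i; apply diam_le_lazy; auto.
Qed.

Lemma graphing_prodN_graph (Es : forall i, I i -> I i -> Prop) m :
  (forall i, graphing (Gs i) (Es i)) -> (forall i, diam_le (Gs i) m) ->
  graphing prodN_graph (prodN_rel Es).
Proof.
  intros HG D; split; [apply prodN_graph_simple; intro i; apply HG|].
  intros x y; split.
  - intros C i; apply HG, connected_prodN_graph_inv, C.
  - intro E; apply connected_lazy; exists m.
    apply lazy_prodN_graph_path_bounded; [exact D | intro i; apply HG, E].
Qed.

Lemma diam_le_prodN_graph m : (forall i, diam_le (Gs i) m) -> diam_le prodN_graph m.
Proof.
  intros D; apply diam_le_lazy; intros x y C.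
  apply lazy_prodN_graph_path_bounded; [exact D | apply connected_prodN_graph_inv, C].
Qed.

Definition update (z : forall i, I i) (i0 : nat) (a : I i0) : forall i, I i :=
  fun i => match Nat.eq_dec i0 i with left e => eq_rect i0 I a i e | right _ => z i end.

Lemma update_eq z i0 a : update z i0 a i0 = a.
Proof.
  unfold update; destruct (Nat.eq_dec i0 i0) as [e|]; [|congruence].
  rewrite (UIP_refl_nat _ e); reflexivity.
Qed.

Lemma diam_le_prodN_graph_inv (z : forall i, I i) m i0 :
  diam_le prodN_graph m -> diam_le (Gs i0) m.
Proof.
  rewrite !diam_le_lazy; intros D a b C.
  assert (P : gpath (lazy_edge prodN_graph) m (update z i0 a) (update z i0 b)).
  { apply D, connected_lazy; apply connected_lazy in C as [n Pn].
    exists n; apply lazy_prodN_graph_path; intro i.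
    unfold update; destruct (Nat.eq_dec i0 i) as [e|]; [subst i; exact Pn|].
    apply (gpath_lazy_pad _ 0); [constructor | lia]. }
  rewrite lazy_prodN_graph_path in P; specialize (P i0); rewrite !update_eq in P; exact P.
Qed.

Lemma has_diameter_prodN_graph (z : forall i, I i) (d : nat -> nat) i0 :
  (forall i, has_diameter (Gs i) (d i)) -> (forall i, (d i <= d i0)%nat) ->
  has_diameter prodN_graph (d i0).
Proof.
  intros HD Hmax; split.
  - apply diam_le_prodN_graph; intro i; apply (diam_le_mono _ (d i)); [apply Hmax | apply HD].
  - intros k D; apply (HD i0), (diam_le_prodN_graph_inv z k i0 D).
Qed.

End CountableProductGraph.

(** * Countable products of recursive Polish spaces *)

Lemma real_Sup_seq_lub (u : nat -> R) B : (forall i, u i <= B) ->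
  (forall n, u n <= real (Sup_seq (fun i => Finite (u i)))) /\
  (forall C, (forall i, u i <= C) -> real (Sup_seq (fun i => Finite (u i))) <= C).
Proof.
  intro HB.
  assert (U : forall C, (forall i, u i <= C) ->
                        Rbar_le (Sup_seq (fun i => Finite (u i))) (Finite C)).
  { intros C HC; apply Rbar_not_lt_le; intro H.
    apply Sup_seq_minor_lt in H as [n Hn]; cbn in Hn; specialize (HC n); lra. }
  assert (L : forall n, Rbar_le (Finite (u n)) (Sup_seq (fun i => Finite (u i))))
    by (intro n; apply Sup_seq_minor_le with n, Rbar_le_refl).
  pose proof (U B HB) as UB; pose proof (L 0%nat) as L0.
  destruct (Sup_seq (fun i => Finite (u i))) as [s| |]; cbn in *; try contradiction.
  split; [intro n; apply (L n) | intros C HC; apply (U C HC)].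
Qed.

Lemma pow_half_gt0 n : 0 < (/ 2) ^ n.
Proof. apply pow_lt; lra. Qed.

Lemma pow_half_le1 n : (/ 2) ^ n <= 1.
Proof.
  induction n as [|n IHn]; cbn; [lra|].
  pose proof (pow_half_gt0 n); nra.
Qed.

Lemma pow2_pow_half n : 2 ^ n * (/ 2) ^ n = 1.
Proof. rewrite <- Rpow_mult_distr, Rinv_r, pow1; lra. Qed.

Lemma pow2_ge1 n : 1 <= 2 ^ n.
Proof. apply pow_R1_Rle; lra. Qed.

Lemma Rmin1_triangle a b c : 0 <= b -> 0 <= c -> a <= b + c -> Rmin 1 a <= Rmin 1 b + Rmin 1 c.
Proof. intros; unfold Rmin; destruct (Rle_dec 1 a), (Rle_dec 1 b), (Rle_dec 1 c); lra. Qed.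

Section CountableProductSpace.

Variable Xs : nat -> space.
Hypothesis HXs : forall i, is_metric (Xs i).

Definition wdist (n : nat) (a b : carrier (Xs n)) : R := (/ 2) ^ n * Rmin 1 (dist (Xs n) a b).

Lemma wdist_ge0 n a b : 0 <= wdist n a b.
Proof.
  apply Rmult_le_pos; [left; apply pow_half_gt0|].
  apply Rmin_glb; [lra | apply dist_ge0, HXs].
Qed.

Lemma wdist_le1 n a b : wdist n a b <= 1.
Proof.
  unfold wdist; pose proof (pow_half_gt0 n); pose proof (pow_half_le1 n).
  pose proof (Rmin_l 1 (dist (Xs n) a b)); pose proof (wdist_ge0 n a b); unfold wdist in *; nra.
Qed.

Lemma wdist_gt0 n a b : a <> b -> 0 < wdist n a b.
Proof.
  intro Hab; apply Rmult_lt_0_compat; [apply pow_half_gt0|].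
  apply Rmin_glb_lt; [lra | apply dist_gt0; auto].
Qed.

Lemma wdist_triangle n a b c : wdist n a c <= wdist n a b + wdist n b c.
Proof.
  unfold wdist; rewrite <- Rmult_plus_distr_l.
  apply Rmult_le_compat_l; [left; apply pow_half_gt0|].
  apply Rmin1_triangle; try apply dist_ge0; auto; apply dist_triangle; auto.
Qed.

Lemma wdist_sym n a b : wdist n a b = wdist n b a.
Proof. unfold wdist; rewrite dist_sym; auto. Qed.

Lemma dist_prodNS x y :
  dist (prodNS Xs) x y = real (Sup_seq (fun i => Finite (wdist i (x i) (y i)))).
Proof. reflexivity. Qed.

Lemma wdist_le_dist x y n : wdist n (x n) (y n) <= dist (prodNS Xs) x y.
Proof.
  rewrite dist_prodNS.
  apply (proj1 (real_Sup_seq_lub (fun i => wdist i (x i) (y i)) 1 (fun i => wdist_le1 _ _ _))).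
Qed.

Lemma dist_coord_lt x y n q : dist (prodNS Xs) x y < q -> 2 ^ n * q <= 1 ->
  dist (Xs n) (x n) (y n) < 2 ^ n * q.
Proof.
  intros Hq Hq1; pose proof (wdist_le_dist x y n) as H; unfold wdist in H.
  pose proof (pow2_pow_half n) as Hinv; pose proof (pow_half_gt0 n); pose proof (pow2_ge1 n).
  assert (Hm : Rmin 1 (dist (Xs n) (x n) (y n)) < 2 ^ n * q).
  { apply (Rmult_lt_reg_l ((/ 2) ^ n)); [lra|].
    rewrite <- Rmult_assoc, (Rmult_comm _ (2 ^ n)), Hinv, Rmult_1_l; lra. }
  unfold Rmin in Hm; destruct (Rle_dec 1 (dist (Xs n) (x n) (y n))); lra.
Qed.

Definition entry (c n : nat) : nat := if Nat.ltb n (u1 c) then code_entry (u2 c) n else 0%nat.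

Lemma pts_prodNS c n : pts (prodNS Xs) c n = pts (Xs n) (entry c n).
Proof. unfold entry; cbn [pts prodNS]; destruct (Nat.ltb n (u1 c)); reflexivity. Qed.

(* The code of the dense point whose coordinates are all [r_0], except the [n]-th which is [r_a]. *)
Definition single_code (n a : nat) : nat := pair (n + 1) (single n a).

Lemma iter_snd_single n a i : (i <= n)%nat ->
  Nat.iter i (fun t => u2 t) (single n a) = single (n - i) a.
Proof.
  induction i as [|i IHi]; intro H; [rewrite Nat.sub_0_r; reflexivity|].
  rewrite Nat.iter_succ, IHi by lia; replace (n - i)%nat with (S (n - S i)) by lia.
  unfold single; rewrite Nat.iter_succ; apply snd_unpair_pair.
Qed.

Lemma entry_single_code n a i : entry (single_code n a) i = if Nat.eqb i n then a else 0%nat.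
Proof.
  unfold entry, single_code; unpair_simpl.
  destruct (Nat.ltb_spec i (n + 1)), (Nat.eqb_spec i n); try lia.
  - subst; unfold code_entry; rewrite iter_snd_single, Nat.sub_diag by lia; apply fst_unpair_pair.
  - unfold code_entry; rewrite iter_snd_single by lia.
    replace (n - i)%nat with (S (n - S i)) by lia.
    unfold single; rewrite Nat.iter_succ; apply fst_unpair_pair.
Qed.

Lemma dist_single_code n a b :
  dist (prodNS Xs) (pts (prodNS Xs) (single_code n a)) (pts (prodNS Xs) (single_code n b)) =
  wdist n (pts (Xs n) a) (pts (Xs n) b).
Proof.
  set (za := pts (prodNS Xs) (single_code n a)); set (zb := pts (prodNS Xs) (single_code n b)).
  assert (T : forall i, wdist i (za i) (zb i) =
                        if Nat.eqb i n then wdist n (pts (Xs n) a) (pts (Xs n) b) else 0).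
  { intro i; unfold za, zb; rewrite !pts_prodNS, !entry_single_code.
    destruct (Nat.eqb_spec i n); [subst; reflexivity|].
    unfold wdist; rewrite dist_refl by auto; unfold Rmin; destruct (Rle_dec 1 0); [lra | ring]. }
  rewrite dist_prodNS.
  destruct (real_Sup_seq_lub _ 1 (fun i => wdist_le1 i (za i) (zb i))) as [L U].
  apply Rle_antisym.
  - apply U; intro i; rewrite T; destruct (Nat.eqb i n); [lra | apply wdist_ge0].
  - specialize (L n); rewrite T, Nat.eqb_refl in L; exact L.
Qed.

End CountableProductSpace.

Section CoordinateBalls.

Variable Xs : nat -> space.
Hypothesis HXs : forall i, is_metric (Xs i).

Local Notation PN := (prodNS Xs).

Lemma wdist_pts_le_dist c x n :
  wdist Xs n (pts (Xs n) (entry c n)) (x n) <= dist PN (pts PN c) x.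
Proof. rewrite <- (pts_prodNS Xs c n); apply (wdist_le_dist Xs HXs). Qed.

Lemma coord_eq_near x y c d n r :
  dist PN (pts PN c) x < r -> dist PN (pts PN d) y < r -> x n = y n ->
  wdist Xs n (pts (Xs n) (entry c n)) (pts (Xs n) (entry d n)) < 2 * r.
Proof.
  intros Hc Hd Hxy.
  pose proof (wdist_pts_le_dist c x n); pose proof (wdist_pts_le_dist d y n).
  pose proof (wdist_triangle Xs HXs n (pts (Xs n) (entry c n)) (x n) (pts (Xs n) (entry d n))).
  rewrite Hxy, (wdist_sym Xs HXs n (y n)) in *; lra.
Qed.

Lemma coord_neq_far x y n : is_RPS PN -> x n <> y n ->
  exists c d k, rat_of 1 k <= 1 /\ dist PN (pts PN c) x < rat_of 1 k /\
    dist PN (pts PN d) y < rat_of 1 k /\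
    ~ wdist Xs n (pts (Xs n) (entry c n)) (pts (Xs n) (entry d n)) < 2 * rat_of 1 k.
Proof.
  intros HN Hxy; pose proof (wdist_gt0 Xs HXs n _ _ Hxy) as Hpos.
  destruct (rat_of_small (wdist Xs n (x n) (y n) / 4)) as [k [Hk Hk1]]; [lra|].
  destruct (RPS_dense_ball PN HN x 1 k) as [c Hc]; [lia|].
  destruct (RPS_dense_ball PN HN y 1 k) as [d Hd]; [lia|].
  exists c, d, k; repeat split; auto; intro Hlt.
  pose proof (wdist_pts_le_dist c x n); pose proof (wdist_pts_le_dist d y n).
  set (a := pts (Xs n) (entry c n)) in *; set (b := pts (Xs n) (entry d n)) in *.
  pose proof (wdist_triangle Xs HXs n (x n) a (y n)).
  pose proof (wdist_triangle Xs HXs n a b (y n)).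
  rewrite (wdist_sym Xs HXs n (x n) a) in *; lra.
Qed.

Lemma coord_ball_of_code x n c a q r :
  dist PN (pts PN c) x < r -> 2 ^ n * r <= 1 ->
  dist (Xs n) a (pts (Xs n) (entry c n)) <= q - 2 ^ n * r -> dist (Xs n) a (x n) < q.
Proof.
  intros Hc Hr Ha; pose proof (dist_coord_lt Xs HXs _ _ n _ Hc Hr) as Hn.
  rewrite pts_prodNS in Hn.
  pose proof (dist_triangle _ (HXs n) a (pts (Xs n) (entry c n)) (x n)); lra.
Qed.

Lemma coord_code_of_ball x y n a b q : is_RPS PN ->
  dist (Xs n) a (x n) < q -> dist (Xs n) b (y n) < q ->
  exists k c d, 2 ^ n * rat_of 1 k <= 1 /\
    dist (Xs n) a (pts (Xs n) (entry c n)) <= q - 2 ^ n * rat_of 1 k /\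
    dist (Xs n) b (pts (Xs n) (entry d n)) <= q - 2 ^ n * rat_of 1 k /\
    dist PN (pts PN c) x < rat_of 1 k /\ dist PN (pts PN d) y < rat_of 1 k.
Proof.
  intros HN Ha Hb.
  set (ea := q - dist (Xs n) a (x n)); set (eb := q - dist (Xs n) b (y n)).
  pose proof (Rmin_l (Rmin ea eb) 1); pose proof (Rmin_r (Rmin ea eb) 1).
  pose proof (Rmin_l ea eb); pose proof (Rmin_r ea eb).
  set (eps := Rmin (Rmin ea eb) 1) in *.
  assert (Heps : 0 < eps) by (unfold eps; repeat apply Rmin_glb_lt; unfold ea, eb; lra).
  pose proof (pow2_ge1 n) as P1.
  destruct (rat_of_small (eps / (2 * 2 ^ n))) as [k [Hk _]];
    [apply Rdiv_lt_0_compat; lra|].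
  assert (Hk2 : 2 * 2 ^ n * rat_of 1 k < eps).
  { apply (Rmult_lt_compat_l (2 * 2 ^ n)) in Hk; [|lra].
    replace (2 * 2 ^ n * (eps / (2 * 2 ^ n))) with eps in Hk by (field; lra); exact Hk. }
  pose proof (rat_of_ge0 1 k).
  destruct (RPS_dense_ball PN HN x 1 k) as [c Hc]; [lia|].
  destruct (RPS_dense_ball PN HN y 1 k) as [d Hd]; [lia|].
  assert (Hr : 2 ^ n * rat_of 1 k <= 1) by lra.
  pose proof (dist_coord_lt Xs HXs _ _ n _ Hc Hr) as Dc.
  pose proof (dist_coord_lt Xs HXs _ _ n _ Hd Hr) as Dd.
  rewrite pts_prodNS in Dc, Dd.
  pose proof (dist_triangle _ (HXs n) a (x n) (pts (Xs n) (entry c n))).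
  pose proof (dist_triangle _ (HXs n) b (y n) (pts (Xs n) (entry d n))).
  rewrite (dist_sym _ (HXs n) (x n)), (dist_sym _ (HXs n) (y n)) in *.
  exists k, c, d; repeat split; auto; unfold ea, eb in *; lra.
Qed.

End CoordinateBalls.

Definition EEntryCode (c n : expr) : expr := EMul (ELt n (EFst c)) (EEntry (ESnd c) n).
Definition ESingleCode (n a : expr) : expr := EPair (EAdd n (EConst 1)) (ESingle n a).

Lemma esem_EEntryCode c n v : esem (EEntryCode c n) v = entry (esem c v) (esem n v).
Proof. cbn [EEntryCode esem]; rewrite esem_ELt; unfold entry; destruct (Nat.ltb _ _); lia. Qed.

Lemma esem_ESingleCode n a v : esem (ESingleCode n a) v = single_code (esem n v) (esem a v).
Proof. reflexivity. Qed.

Lemma ewf_EEntryCode c n : ewf c -> ewf n -> ewf (EEntryCode c n).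
Proof. cbn; tauto. Qed.

Lemma ewf_ESingleCode n a : ewf n -> ewf a -> ewf (ESingleCode n a).
Proof. cbn; tauto. Qed.

Lemma nbhd_prodS3 N W s n x y : nbhd (prodS N (prodS W W)) s (n, (x, y)) <->
  dist N (pts N (u1 (u1 s))) n < radius s /\ dist W (pts W (u1 (u2 (u1 s)))) x < radius s /\
  dist W (pts W (u2 (u2 (u1 s)))) y < radius s.
Proof. rewrite nbhd_prodS, dist_prodS_pts_lt; tauto. Qed.

Lemma dist_natS_refl n : dist natS n n = 0.
Proof. apply (dist_refl _ natS_metric). Qed.

(* The code [s] of a ball of radius [r_s <= 1] around [(n, (c, d))] passes the test when the
   points of the product agreeing with [c], [d] at coordinate [n] (and equal to [r_0] elsewhere)
   are [2 r_s] apart. *)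
Definition coord_neq_test (Xs : nat -> space) (p : prf) : expr :=
  let s := EVar 1 in let n := EFst (EFst s) in let m := EFst (ESnd s) in let k := ESnd (ESnd s) in
  EMul (ELe m (EAdd k (EConst 1)))
       (ENot (ECall p (chi (pts_dist_lt (prodNS Xs)))
                (ESingleCode n (EEntryCode (EFst (ESnd (EFst s))) n))
                (ESingleCode n (EEntryCode (ESnd (ESnd (EFst s))) n))
                (EMul (EConst 2) m) k)).

Lemma ewf_coord_neq_test Xs p : computes p (chi (pts_dist_lt (prodNS Xs))) ->
  ewf (coord_neq_test Xs p).
Proof.
  intro Hp; cbn [coord_neq_test ewf]; repeat split; try apply ewf_ESingleCode;
    try apply ewf_EEntryCode; cbn; tauto.
Qed.

Lemma esem_coord_neq_test Xs p w c : (forall i, is_metric (Xs i)) ->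
  esem (coord_neq_test Xs p) [w; c] <> 0%nat <->
  (u1 (u2 c) <= u2 (u2 c) + 1)%nat /\
  ~ wdist Xs (u1 (u1 c)) (pts _ (entry (u1 (u2 (u1 c))) (u1 (u1 c))))
                         (pts _ (entry (u2 (u2 (u1 c))) (u1 (u1 c)))) < 2 * radius c.
Proof.
  intro MX; unfold coord_neq_test; cbn zeta; cbn [ENot esem].
  rewrite esem_ELe, !esem_ESingleCode, !esem_EEntryCode; cbn [esem nth].
  match goal with |- context [chi ?P ?l] => destruct (chi_spec P l) as [[A ->]|[A ->]] end;
    unfold pts_dist_lt in A; cbn [nth] in A; rewrite rat_of_double, dist_single_code in A by auto;
    unfold radius; destruct (Nat.leb_spec (u1 (u2 c)) (u2 (u2 c) + 1));
    split; intro; try tauto; lia.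
Qed.

Lemma coord_neq_Sigma01 Xs : (forall i, is_RPS (Xs i)) -> is_RPS (prodNS Xs) ->
  Sigma01 (prodS natS (prodS (prodNS Xs) (prodNS Xs)))
    (fun p => fst (snd p) (fst p) <> snd (snd p) (fst p)).
Proof.
  intros HXs HN; assert (MX : forall i, is_metric (Xs i)) by (intro; apply RPS_metric, HXs).
  destruct (RPS_dist_lt_prf _ HN) as [p Hp].
  apply (Sigma01_of_expr _ _ (coord_neq_test Xs p)); [apply ewf_coord_neq_test, Hp|].
  intros [i [x y]]; cbn [fst snd]; split.
  - intro Hxy; destruct (coord_neq_far Xs MX x y i HN Hxy) as (c & d & r & Hr1 & Hc & Hd & Hfar).
    exists (pair (pair i (pair c d)) (pair 1 r)); split.
    + exists 0%nat; apply esem_coord_neq_test; auto.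
      rewrite radius_code; unpair_simpl; split; [lia | exact Hfar].
    + apply nbhd_prodS3; rewrite radius_code; unpair_simpl.
      rewrite dist_natS_refl; repeat split; auto; apply rat_of_gt0; lia.
  - intros [c [[w Hw] Hc]] Hxy; apply esem_coord_neq_test in Hw as [Hr Hfar]; auto.
    apply nbhd_prodS3 in Hc as (H0 & H1 & H2).
    apply natS_dist_lt1 in H0; [subst i | apply radius_le1, Hr].
    apply Hfar, (coord_eq_near Xs MX x y); auto.
Qed.

(* With [s] the code of a ball around [(a, b)] in [X × X] and [t] that of a ball around
   [(n, (c, d))], the test certifies [2^n r_t <= 1], [2^n r_t <= r_s] and that [c_n], [d_n] are
   within [r_s - 2^n r_t] of [a], [b]; the last radius is [rat_of M K] below. *)
Definition eval_coord_test (X : space) (p : prf) : expr :=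
  let s := EFst (EVar 1) in let t := ESnd (EVar 1) in
  let m := EFst (ESnd s) in let k := ESnd (ESnd s) in
  let n := EFst (EFst t) in let m' := EFst (ESnd t) in let k' := ESnd (ESnd t) in
  let A := EMul (EMul (EPow2 n) m') (EAdd k (EConst 1)) in
  let B := EMul m (EAdd k' (EConst 1)) in
  let M := ESub B A in
  let K := ESub (EMul (EAdd k (EConst 1)) (EAdd k' (EConst 1))) (EConst 1) in
  EMul (EMul (ELe (EMul (EPow2 n) m') (EAdd k' (EConst 1))) (ELe A B))
       (EMul (ECall p (chi (pts_dist_le X)) (EFst (EFst s))
                    (EEntryCode (EFst (ESnd (EFst t))) n) M K)
             (ECall p (chi (pts_dist_le X)) (ESnd (EFst s))
                    (EEntryCode (ESnd (ESnd (EFst t))) n) M K)).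

Lemma ewf_eval_coord_test X p : computes p (chi (pts_dist_le X)) -> ewf (eval_coord_test X p).
Proof. intro Hp; cbn; repeat split; try apply ewf_EEntryCode; cbn; tauto. Qed.

Lemma esem_eval_coord_test X p w c c' :
  esem (eval_coord_test X p) [w; pair c c'] <> 0%nat <->
  (2 ^ u1 (u1 c') * u1 (u2 c') <= u2 (u2 c') + 1)%nat /\
  (2 ^ u1 (u1 c') * u1 (u2 c') * (u2 (u2 c) + 1) <= u1 (u2 c) * (u2 (u2 c') + 1))%nat /\
  dist X (pts X (u1 (u1 c))) (pts X (entry (u1 (u2 (u1 c'))) (u1 (u1 c')))) <=
    rat_of (u1 (u2 c) * (u2 (u2 c') + 1) - 2 ^ u1 (u1 c') * u1 (u2 c') * (u2 (u2 c) + 1))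
           ((u2 (u2 c) + 1) * (u2 (u2 c') + 1) - 1) /\
  dist X (pts X (u2 (u1 c))) (pts X (entry (u2 (u2 (u1 c'))) (u1 (u1 c')))) <=
    rat_of (u1 (u2 c) * (u2 (u2 c') + 1) - 2 ^ u1 (u1 c') * u1 (u2 c') * (u2 (u2 c) + 1))
           ((u2 (u2 c) + 1) * (u2 (u2 c') + 1) - 1).
Proof.
  unfold eval_coord_test; cbn zeta; cbn [esem]; rewrite !esem_ELe, !esem_EEntryCode.
  cbn [esem nth]; unpair_simpl.
  match goal with |- context [(chi ?P ?l1 * chi ?P ?l2)%nat] =>
    destruct (chi_spec P l1) as [[A1 ->]|[A1 ->]], (chi_spec P l2) as [[A2 ->]|[A2 ->]] end;
    unfold pts_dist_le in A1, A2; cbn [nth] in A1, A2;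
    destruct (Nat.leb_spec (2 ^ u1 (u1 c') * u1 (u2 c')) (u2 (u2 c') + 1)),
      (Nat.leb_spec (2 ^ u1 (u1 c') * u1 (u2 c') * (u2 (u2 c) + 1)) (u1 (u2 c) * (u2 (u2 c') + 1)));
    split; intros; try tauto; lia.
Qed.

Lemma eval_coord_computable X : is_RPS X -> is_RPS (prodNS (fun _ => X)) ->
  computable (prodS natS (prodS (prodNS (fun _ => X)) (prodNS (fun _ => X)))) (prodS X X)
    (fun p => (fst (snd p) (fst p), snd (snd p) (fst p))).
Proof.
  intros HX HN; pose proof (RPS_metric X HX) as MX.
  destruct (RPS_dist_le_prf X HX) as [p Hp].
  apply (computable_of_expr _ _ _ (eval_coord_test X p)); [apply ewf_eval_coord_test, Hp|].
  intros [i [x y]] c; cbn [fst snd]; rewrite nbhd_prodS; split.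
  - intros [Ha Hb].
    destruct (coord_code_of_ball _ (fun _ => MX) x y i _ _ _ HN Ha Hb)
      as (r & c1 & c2 & Hr & Hc1 & Hc2 & Hx & Hy).
    exists (pair (pair i (pair c1 c2)) (pair 1 r)); split.
    + exists 0%nat; apply esem_eval_coord_test; unpair_simpl.
      assert (Hr' : (2 ^ i * 1 <= r + 1)%nat).
      { enough (2 ^ i * 1 * 1 <= 1 * S r)%nat by lia.
        apply rat_of_le_iff; rewrite rat_of_pow2, rat_of_1_0; exact Hr. }
      assert (Hq : (2 ^ i * 1 * (u2 (u2 c) + 1) <= u1 (u2 c) * (r + 1))%nat).
      { enough (2 ^ i * 1 * S (u2 (u2 c)) <= u1 (u2 c) * S r)%nat by lia.
        apply rat_of_le_iff; rewrite rat_of_pow2; fold (radius c).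
        pose proof (dist_ge0 X MX (pts X (u1 (u1 c))) (pts X (entry c1 i))); lra. }
      repeat split; auto; rewrite rat_of_sub by exact Hq; exact Hc1 || exact Hc2.
    + apply nbhd_prodS3; rewrite radius_code; unpair_simpl.
      rewrite dist_natS_refl; repeat split; auto; apply rat_of_gt0; lia.
  - intros [c' [[w Hw] Hc']]; apply esem_eval_coord_test in Hw as (C1 & C2 & C3 & C4).
    rewrite rat_of_sub in C3, C4 by exact C2; fold (radius c) (radius c') in C3, C4.
    apply nbhd_prodS3 in Hc' as (H0 & H1 & H2).
    assert (Hr : 2 ^ u1 (u1 c') * radius c' <= 1).
    { unfold radius; rewrite <- rat_of_pow2, <- rat_of_1_0; apply rat_of_le_iff; lia. }
    pose proof (pow2_ge1 (u1 (u1 c'))); pose proof (rat_of_ge0 (u1 (u2 c')) (u2 (u2 c'))).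
    apply natS_dist_lt1 in H0; [subst i | unfold radius in *; nra].
    split; eapply (coord_ball_of_code _ (fun _ => MX)); eauto.
Qed.

(** * Definability of the product graphings *)

Section Pointclass.

Variable Gm : pointclass.
Hypotheses (HS : contains_Sigma01 Gm) (HP : contains_Pi01 Gm) (Hor : pc_closed_or Gm)
  (Hand : pc_closed_and Gm) (Hsub : pc_closed_comp_subst Gm).

Lemma graph_in_lazy_edge X G : is_RPS X -> graph_in Gm X G -> graph_in Gm X (lazy_edge G).
Proof.
  intros HX IG; pose proof (prodS_RPS _ _ HX HX) as HXX.
  exact (Hor _ HXX _ _ IG (HP _ HXX _ (neq_Sigma01 X HX))).
Qed.

Lemma graph_in_prod_graph X Y GX GY : is_RPS X -> is_RPS Y ->
  graph_in Gm X GX -> graph_in Gm Y GY -> graph_in Gm (prodS X Y) (prod_graph GX GY).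
Proof.
  intros HX HY IX IY.
  pose proof (prodS_RPS _ _ HX HY) as HXY; pose proof (prodS_RPS _ _ HXY HXY) as H4.
  pose proof (Hsub _ _ H4 (prodS_RPS _ _ HX HX) _ _ (fst_pair_computable X Y HX HY)
                (graph_in_lazy_edge X GX HX IX)) as JX.
  pose proof (Hsub _ _ H4 (prodS_RPS _ _ HY HY) _ _ (snd_pair_computable X Y HX HY)
                (graph_in_lazy_edge Y GY HY IY)) as JY.
  exact (Hand _ H4 _ _ (HS _ H4 _ (neq_Sigma01 _ HXY)) (Hand _ H4 _ _ JX JY)).
Qed.

Lemma graph_in_prodN_graph Xs Gs : (forall i, is_RPS (Xs i)) -> is_RPS (prodNS Xs) ->
  Gm (prodS natS (prodS (prodNS Xs) (prodNS Xs)))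
     (fun p => Gs (fst p) (fst (snd p) (fst p)) (snd (snd p) (fst p))) ->
  graph_in (forallN Gm) (prodNS Xs) (prodN_graph Gs).
Proof.
  intros HXs HN IG.
  pose proof (prodS_RPS _ _ HN HN) as HNN; pose proof (prodS_RPS _ _ natS_RPS HNN) as H3.
  pose proof (Hsub _ _ H3 HNN _ _ (snd_computable _ _ natS_RPS HNN)
                (HS _ HNN _ (neq_Sigma01 _ HN))) as Jneq.
  pose proof (Hor _ H3 _ _ IG (HP _ H3 _ (coord_neq_Sigma01 Xs HXs HN))) as Jcoord.
  eexists; split; [exact (Hand _ H3 _ _ Jneq Jcoord)|].
  intros [x y]; cbn [fst snd]; split.
  - intros [Hxy H] n; split; [exact Hxy | apply H].
  - intro H; split; [apply (H 0%nat) | intro n; apply H].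
Qed.

Lemma uniform_graph_in_const X G : is_RPS X -> is_RPS (prodNS (fun _ => X)) ->
  graph_in Gm X G ->
  Gm (prodS natS (prodS (prodNS (fun _ => X)) (prodNS (fun _ => X))))
     (fun p => G (fst (snd p) (fst p)) (snd (snd p) (fst p))).
Proof.
  intros HX HN IG; pose proof (prodS_RPS _ _ HN HN) as HNN.
  exact (Hsub _ _ (prodS_RPS _ _ natS_RPS HNN) (prodS_RPS _ _ HX HX) _ _
           (eval_coord_computable X HX HN) IG).
Qed.

Lemma graphable_diam_prodN Xs Es Gs (d : nat -> nat) i0 :
  (forall i, is_RPS (Xs i)) -> is_RPS (prodNS Xs) ->
  (forall i, graphing (Gs i) (Es i)) -> (forall i, has_diameter (Gs i) (d i)) ->
  (forall i, (d i <= d i0)%nat) ->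
  Gm (prodS natS (prodS (prodNS Xs) (prodNS Xs)))
     (fun p => Gs (fst p) (fst (snd p) (fst p)) (snd (snd p) (fst p))) ->
  graphable_diam (forallN Gm) (prodNS Xs) (prodN_rel Es) (d i0).
Proof.
  intros HXs HN HG HD Hmax IG; exists (prodN_graph Gs); split; [|split].
  - apply (graphing_prodN_graph _ _ (d i0) HG); intro i.
    apply (diam_le_mono _ (d i)); [apply Hmax | apply HD].
  - apply (graph_in_prodN_graph Xs Gs); auto.
  - apply (has_diameter_prodN_graph _ (fun i => pts (Xs i) 0%nat)); auto.
Qed.

End Pointclass.

Theorem proposition2p8 (Gm : pointclass)
  (HS : contains_Sigma01 Gm) (HP : contains_Pi01 Gm)
  (Hor : pc_closed_or Gm) (Hand : pc_closed_and Gm) (Hsub : pc_closed_comp_subst Gm) :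
  (* (i) *)
  (forall (X Y : space) (E : carrier X -> carrier X -> Prop)
          (F : carrier Y -> carrier Y -> Prop),
      is_RPS X -> is_RPS Y -> is_equiv E -> is_equiv F ->
      (graphable Gm X E -> graphable Gm Y F ->
         graphable Gm (prodS X Y) (prod_rel E F)) /\
      (forall k l : nat, graphable_diam Gm X E k -> graphable_diam Gm Y F l ->
         graphable_diam Gm (prodS X Y) (prod_rel E F) (Nat.max k l)))
  /\
  (* (ii) *)
  (forall (Xs : nat -> space) (Es : forall i, carrier (Xs i) -> carrier (Xs i) -> Prop)
          (Gs : forall i, carrier (Xs i) -> carrier (Xs i) -> Prop) (d : nat -> nat),
      (forall i, is_RPS (Xs i)) -> (forall i, is_equiv (Es i)) ->
      is_RPS (prodNS Xs) ->
      (forall i, graphing (Gs i) (Es i)) ->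
      (forall i, has_diameter (Gs i) (d i)) ->
      Gm (prodS natS (prodS (prodNS Xs) (prodNS Xs)))
         (fun p => Gs (fst p) (fst (snd p) (fst p)) (snd (snd p) (fst p))) ->
      (exists B, forall i, (d i <= B)%nat) ->
      exists m, (forall i, (d i <= m)%nat) /\ (exists i, d i = m) /\
        graphable_diam (forallN Gm) (prodNS Xs) (prodN_rel Es) m)
  /\
  (* (ii), in particular *)
  (forall (X : space) (E : carrier X -> carrier X -> Prop) (k : nat),
      is_RPS X -> is_equiv E -> is_RPS (prodNS (fun _ => X)) ->
      graphable_diam Gm X E k ->
      graphable_diam (forallN Gm) (prodNS (fun _ => X))
        (prodN_rel (fun _ => E)) k).
Proof.
  split; [|split].
  - intros X Y E F HX HY _ _; split.
    + intros [GX [HGX IX]] [GY [HGY IY]]; exists (prod_graph GX GY); split.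
      * apply graphing_prod_graph; auto.
      * apply graph_in_prod_graph; auto.
    + intros k l [GX (HGX & IX & DX)] [GY (HGY & IY & DY)]; exists (prod_graph GX GY).
      split; [|split].
      * apply graphing_prod_graph; auto.
      * apply graph_in_prod_graph; auto.
      * apply (has_diameter_prod_graph _ _ k l (pts X 0%nat) (pts Y 0%nat)); auto.
  - intros Xs Es Gs d HXs _ HN HG HD IG [B HB].
    destruct (nat_bounded_attains_max d B HB) as [m [Hm [i0 <-]]].
    exists (d i0); split; [exact Hm | split; [exists i0; reflexivity|]].
    apply graphable_diam_prodN with (Gs := Gs); auto.
  - intros X E k HX _ HN [G (HG & IG & DG)].
    apply graphable_diam_prodN with (Gs := fun _ => G) (d := fun _ => k) (i0 := 0%nat); auto.
    apply uniform_graph_in_const; auto.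
Qed.
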